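(* Let $T>0$ and let $g$ be continuous and nonnegative on $[0,T]$ with $g(0)=0$. Assume that for each boundary function $s$ on $[0,T]$ the Fixed Boundary Dirichlet Problem on $s$ with data $g$ has a solution $U^s$, and define $$\mathcal{R}(s)(t)=-\int_0^t U^s_x(s(z),z)\,dz=-\int_0^t U^s_x(0,z)\,dz-\int_0^{s(t)}U^s(x,t)\,dx,\qquad 0\le t\le T.$$ If $s_1,s_2$ are boundary functions with $s_1(t)\le s_2(t)$ for all $t\in[0,T]$, then $\mathcal{R}(s_1)(t)\ge\mathcal{R}(s_2)(t)$ for all $t\in[0,T]$.
   Context: A boundary function on $[0,T]$ is a function $s\in C([0,T])\cap C^1((0,T])$ with $s(0)=0$ and $s(t)>0$ for $t\in(0,T]$. For such $s$ let $Q_{s,T}=\{(x,t):0<x<s(t),\,0<t<T\}$. The Fixed Boundary Dirichlet Problem on $s$ with data $g$ asks for $U\in C(\overline{Q_{s,T}})\cap C^{2,1}(Q_{s,T})$ with $U_x$ continuous on $\overline{Q_{s,T}}\setminus\{t=0\}$ such that $U_t=U_{xx}$ in $Q_{s,T}$, $U(0,0)=0$, $U(s(t),t)=0$ for $t\in[0,T]$, and $U(0,t)=g(t)$ for $t\in[0,T]$. Its solution is denoted $U^s$. The two expressions for $\mathcal{R}(s)(t)$ agree for such solutions (by integrating $U_t=U_{xx}$ over $Q_{s,t}$). *)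

From Stdlib Require Import Reals.
From Coquelicot Require Import Coquelicot.
Open Scope R_scope.

Definition cont_within (A : R -> Prop) (f : R -> R) (t : R) : Prop :=
  forall eps, 0 < eps -> exists d, 0 < d /\
    forall u, A u -> Rabs (u - t) < d -> Rabs (f u - f t) < eps.

Definition cont_on (A : R -> Prop) (f : R -> R) : Prop :=
  forall t, A t -> cont_within A f t.

Definition deriv_within (A : R -> Prop) (f : R -> R) (t l : R) : Prop :=
  forall eps, 0 < eps -> exists d, 0 < d /\
    forall u, A u -> Rabs (u - t) < d ->
      Rabs (f u - f t - l * (u - t)) <= eps * Rabs (u - t).

Definition cont2_on (A : R -> R -> Prop) (f : R -> R -> R) : Prop :=
  forall x t, A x t -> forall eps, 0 < eps -> exists d, 0 < d /\
    forall y u, A y u -> Rabs (y - x) < d -> Rabs (u - t) < d ->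
      Rabs (f y u - f x t) < eps.

Definition boundary_fn (T : R) (s : R -> R) : Prop :=
  cont_on (fun t => 0 <= t <= T) s /\
  (exists ds : R -> R,
     (forall t, 0 < t <= T -> deriv_within (fun u => 0 < u <= T) s t (ds t)) /\
     cont_on (fun t => 0 < t <= T) ds) /\
  s 0 = 0 /\
  (forall t, 0 < t <= T -> 0 < s t).

Definition Qdom (s : R -> R) (T : R) (x t : R) : Prop :=
  0 < x < s t /\ 0 < t < T.

Definition Qbar (s : R -> R) (T : R) (x t : R) : Prop :=
  0 <= t <= T /\ 0 <= x <= s t.

Definition Qbar' (s : R -> R) (T : R) (x t : R) : Prop :=
  Qbar s T x t /\ 0 < t.

(* U solves the Fixed Boundary Dirichlet Problem on s with data g, and Ux is
   U_x on Q_{s,T}, continuously extended to the closure minus {t = 0}. *)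
Definition FBDP_sol (T : R) (s g : R -> R) (U Ux : R -> R -> R) : Prop :=
  exists Uxx Ut : R -> R -> R,
    cont2_on (Qbar s T) U /\
    (forall x t, Qdom s T x t ->
       is_derive (fun y => U y t) x (Ux x t) /\
       is_derive (fun y => Ux y t) x (Uxx x t) /\
       is_derive (fun u => U x u) t (Ut x t)) /\
    cont2_on (Qdom s T) Ux /\ cont2_on (Qdom s T) Uxx /\ cont2_on (Qdom s T) Ut /\
    cont2_on (Qbar' s T) Ux /\
    (forall x t, Qdom s T x t -> Ut x t = Uxx x t) /\
    U 0 0 = 0 /\
    (forall t, 0 <= t <= T -> U (s t) t = 0) /\
    (forall t, 0 <= t <= T -> U 0 t = g t).

(* Rval s Ux t r : r = R(s)(t) = - int_0^t U_x(s(z),z) dz, the integral being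
   understood as an improper integral at z = 0 (value in extended reals). *)
Definition Rval (s : R -> R) (Ux : R -> R -> R) (t : R) (r : Rbar) : Prop :=
  (t = 0 /\ r = Finite 0) \/
  (0 < t /\ filterlim (fun e => - RInt (fun z => Ux (s z) z) e t)
                      (at_right 0) (Rbar_locally r)).

(* By the maximum principle U1, U2 >= 0, and U2 - U1 >= 0 on Q_{s1,T} since it
   vanishes on x = 0 and equals U2 >= 0 on x = s1; hence U1_x(0,.) <= U2_x(0,.) and
   U_x(s(.),.) <= 0.  Integrating U_t = U_xx over {e < z < t, 0 < x < s(z)} gives
   the mass balance
     - int_e^t U_x(s(z),z) dz = - int_e^t U_x(0,z) dz - M(t) + M(e),
   where M(t) = int_0^s(t) U(x,t) dx, and M1(t) <= M2(t), M1(e) >= 0 turn it into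
   f2(e) <= f1(e) + M2(e) for the outflows f_i(e) = - int_e^t U_ix(s_i(z),z) dz.
   Each f_i is monotone in e, so R(s_i)(t) is its supremum (possibly +oo), and
   M2(e) -> 0 as e -> 0 gives R(s2)(t) <= R(s1)(t).  The balance is first proved
   on the strips a s(z) <= x <= (1 - a) s(z), where U may be differentiated under
   the integral sign, and then a -> 0. *)

From Stdlib Require Import Reals Lra Psatz ClassicalEpsilon Classical.
From Coquelicot Require Import Coquelicot.
Open Scope R_scope.

Ltac split_lra := repeat match goal with |- _ /\ _ => split end; lra.

Definition cont_at (f : R -> R) (x : R) : Prop :=
  forall eps, 0 < eps -> exists d, 0 < d /\
    forall u, Rabs (u - x) < d -> Rabs (f u - f x) < eps.

Lemma cont_at_continuity_pt f x : cont_at f x <-> continuity_pt f x.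
Proof.
  unfold continuity_pt, continue_in, limit1_in, limit_in; simpl; unfold R_dist.
  split.
  - intros H eps He. destruct (H eps He) as [d [Hd H1]].
    exists d; split; [exact Hd|]. intros y [_ Hy]. apply H1; exact Hy.
  - intros H eps He. destruct (H eps He) as [d [Hd H1]].
    exists d; split; [exact Hd|]. intros u Hu.
    destruct (Req_dec u x) as [->|Hne].
    + rewrite Rminus_diag, Rabs_R0; exact He.
    + apply H1. split; [split; [exact I| auto] | exact Hu].
Qed.

Lemma cont_at_continuous f x : cont_at f x <-> continuous f x.
Proof. rewrite cont_at_continuity_pt. apply continuity_pt_filterlim. Qed.

Lemma cont_at_const (c x : R) : cont_at (fun _ => c) x.
Proof. intros e He. exists 1; split; [lra|]. intros. rewrite Rminus_diag, Rabs_R0; auto. Qed.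

Lemma cont_at_plus (f g : R -> R) x :
  cont_at f x -> cont_at g x -> cont_at (fun y => f y + g y) x.
Proof. rewrite !cont_at_continuous. intros. apply (continuous_plus f g x); auto. Qed.

Lemma cont_at_minus (f g : R -> R) x :
  cont_at f x -> cont_at g x -> cont_at (fun y => f y - g y) x.
Proof. rewrite !cont_at_continuous. intros. apply (continuous_minus f g x); auto. Qed.

Lemma cont_at_mult (f g : R -> R) x :
  cont_at f x -> cont_at g x -> cont_at (fun y => f y * g y) x.
Proof. rewrite !cont_at_continuous. intros. apply (continuous_mult f g x); auto. Qed.

Lemma cont_at_scal (k : R) f x : cont_at f x -> cont_at (fun y => k * f y) x.
Proof. intros. apply cont_at_mult; auto. apply cont_at_const. Qed.

Lemma cont_within_cont_at (A : R -> Prop) f t r : 0 < r ->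
  (forall u, Rabs (u - t) < r -> A u) -> cont_within A f t -> cont_at f t.
Proof.
  intros Hr HA Hf eps He. destruct (Hf eps He) as [d [Hd H1]].
  exists (Rmin d r); split; [apply Rmin_pos; auto|].
  intros u Hu. assert (Hm1 := Rmin_l d r). assert (Hm2 := Rmin_r d r).
  apply H1; [apply HA|]; lra.
Qed.

Lemma cont_within_subset (A B : R -> Prop) f x :
  (forall y, A y -> B y) -> cont_within B f x -> cont_within A f x.
Proof.
  intros HAB Hf eps He. destruct (Hf eps He) as [d [Hd H1]]. exists d; split; auto.
Qed.

Lemma cont_within_minus (A : R -> Prop) (f g : R -> R) x :
  cont_within A f x -> cont_within A g x -> cont_within A (fun y => f y - g y) x.
Proof.
  intros Hf Hg eps He.
  destruct (Hf (eps/2)) as [d1 [Hd1 H1]]; [lra|].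
  destruct (Hg (eps/2)) as [d2 [Hd2 H2]]; [lra|].
  exists (Rmin d1 d2); split; [apply Rmin_pos; auto|].
  intros u Hu Hux. pose proof (Rmin_l d1 d2). pose proof (Rmin_r d1 d2).
  assert (A1 := H1 u Hu ltac:(lra)). assert (A2 := H2 u Hu ltac:(lra)).
  replace (f u - g u - (f x - g x)) with ((f u - f x) - (g u - g x)) by ring.
  eapply Rle_lt_trans; [apply Rabs_triang|]. rewrite Rabs_Ropp. lra.
Qed.

Lemma cont_on_interior T (A : R -> Prop) f t : 0 < t < T ->
  (forall u, 0 < u < T -> A u) -> cont_on A f -> cont_at f t.
Proof.
  intros Ht HA Hf. apply (cont_within_cont_at A f t (Rmin t (T - t))).
  - apply Rmin_pos; lra.
  - intros u Hu. pose proof (Rmin_l t (T-t)). pose proof (Rmin_r t (T-t)).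
    apply Rabs_def2 in Hu. apply HA. lra.
  - apply Hf, HA; lra.
Qed.

Definition clamp (c d x : R) := Rmin (Rmax x c) d.

Lemma clamp_in c d x : c <= d -> c <= clamp c d x <= d.
Proof. unfold clamp, Rmin, Rmax; intros; repeat destruct Rle_dec; lra. Qed.

Lemma clamp_id c d x : c <= x <= d -> clamp c d x = x.
Proof. unfold clamp, Rmin, Rmax; intros; repeat destruct Rle_dec; lra. Qed.

Lemma clamp_dist c d d' x y : c <= d -> c <= d' ->
  Rabs (clamp c d x - clamp c d' y) <= Rabs (x - y) + Rabs (d - d').
Proof.
  unfold clamp, Rmin, Rmax; intros; repeat destruct Rle_dec;
  unfold Rabs; repeat destruct Rcase_abs; lra.
Qed.

Lemma clamp_lipschitz c d x y : c <= d -> Rabs (clamp c d x - clamp c d y) <= Rabs (x - y).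
Proof.
  intros. pose proof (clamp_dist c d d x y H H). rewrite Rminus_diag, Rabs_R0 in H0. lra.
Qed.

Lemma cont_within_clamp (f : R -> R) c d : c <= d ->
  (forall x, c <= x <= d -> cont_within (fun y => c <= y <= d) f x) ->
  forall x, cont_at (fun y => f (clamp c d y)) x.
Proof.
  intros Hcd Hf x eps He.
  destruct (Hf (clamp c d x) (clamp_in c d x Hcd) eps He) as [del [Hdel H1]].
  exists del; split; auto. intros u Hu.
  apply H1; [apply clamp_in; auto|].
  eapply Rle_lt_trans; [apply clamp_lipschitz; auto| exact Hu].
Qed.

Lemma ex_RInt_cont_within f a b : a <= b ->
  (forall x, a <= x <= b -> cont_within (fun y => a <= y <= b) f x) ->
  ex_RInt f a b.
Proof.
  intros Hab Hf.
  apply ex_RInt_ext with (f := fun y => f (clamp a b y)).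
  - intros x Hx. rewrite Rmin_left, Rmax_right in Hx by lra. rewrite clamp_id; auto; lra.
  - apply (@ex_RInt_continuous R_CompleteNormedModule). intros z _.
    apply cont_at_continuous. apply cont_within_clamp; auto.
Qed.

Lemma cont_within_bounded f a b : a <= b ->
  (forall x, a <= x <= b -> cont_within (fun y => a <= y <= b) f x) ->
  exists B, forall x, a <= x <= b -> Rabs (f x) <= B.
Proof.
  intros Hab Hf.
  assert (Hc : forall x, cont_at (fun y => - Rabs (f (clamp a b y))) x).
  { intros x. apply cont_at_continuous.
    apply (continuous_opp (fun y => Rabs (f (clamp a b y)))).
    apply (continuous_comp (fun y => f (clamp a b y)) Rabs).
    - apply cont_at_continuous, cont_within_clamp; auto.
    - apply continuous_Rabs. }
  destruct (continuity_ab_min (fun y => - Rabs (f (clamp a b y))) a b Hab) as [m [Hm _]].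
  { intros c _. apply cont_at_continuity_pt. apply Hc. }
  exists (Rabs (f (clamp a b m))). intros x Hx. specialize (Hm x Hx). simpl in Hm.
  rewrite (clamp_id a b x Hx) in Hm. lra.
Qed.

Lemma eq0_of_Rabs_le_eps X K : 0 <= K -> (forall eps, 0 < eps -> Rabs X <= eps * K) -> X = 0.
Proof.
  intros HK H. destruct (Req_dec X 0) as [ok|Hne]; auto. exfalso.
  assert (HX : 0 < Rabs X) by (apply Rabs_pos_lt; auto).
  specialize (H (Rabs X / (2 * (K + 1))) ltac:(apply Rdiv_lt_0_compat; lra)).
  assert (E : Rabs X / (2 * (K + 1)) * (2 * (K + 1)) = Rabs X) by (field; lra).
  nra.
Qed.

Lemma abs_RInt_minus_le (f g : R -> R) a b c : a <= b -> ex_RInt f a b -> ex_RInt g a b ->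
  (forall t, a <= t <= b -> Rabs (f t - g t) <= c) ->
  Rabs (RInt f a b - RInt g a b) <= (b - a) * c.
Proof.
  intros Hab Hf Hg H.
  replace (RInt f a b - RInt g a b) with (RInt (fun t => f t - g t) a b)
    by exact (RInt_minus f g a b Hf Hg).
  apply abs_RInt_le_const; auto.
  apply (@ex_RInt_minus R_NormedModule f g a b Hf Hg).
Qed.

Lemma abs_RInt_le_const_any (f : R -> R) p q B : (forall x, Rabs (f x) <= B) ->
  (forall p q, ex_RInt f p q) -> Rabs (RInt f p q) <= Rabs (q - p) * B.
Proof.
  intros HB Hex. destruct (Rle_dec p q) as [Hpq|Hpq].
  - rewrite (Rabs_right (q - p)) by lra.
    apply abs_RInt_le_const; [lra| apply Hex| intros; apply HB].
  - rewrite <- (opp_RInt_swap f q p (Hex q p)).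
    change (Rabs (opp (RInt f q p))) with (Rabs (- RInt f q p)).
    rewrite Rabs_Ropp, (Rabs_left (q - p)) by lra.
    replace (- (q - p)) with (p - q) by ring.
    apply abs_RInt_le_const; [lra| apply Hex| intros; apply HB].
Qed.

Definition jointly_continuous (F : R -> R -> R) : Prop :=
  forall x t eps, 0 < eps -> exists d, 0 < d /\
    forall y u, Rabs (y - x) < d -> Rabs (u - t) < d -> Rabs (F y u - F x t) < eps.

Lemma jointly_continuous_slice F t x : jointly_continuous F -> cont_at (fun y => F y t) x.
Proof.
  intros H eps He. destruct (H x t eps He) as [d [Hd H1]].
  exists d; split; auto. intros u Hu. apply H1; auto. rewrite Rminus_diag, Rabs_R0; auto.
Qed.

Lemma jointly_continuous_opp F : jointly_continuous F -> jointly_continuous (fun x t => - F x t).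
Proof.
  intros HF x t eps He. destruct (HF x t eps He) as [d [Hd H1]].
  exists d; split; auto. intros y u Hy Hu.
  replace (- F y u - - F x t) with (- (F y u - F x t)) by ring. rewrite Rabs_Ropp; auto.
Qed.

Lemma jointly_continuous_unif F a b c d : jointly_continuous F ->
  forall eps, 0 < eps -> exists del, 0 < del /\
  forall x t y u, a <= x <= b -> c <= t <= d -> Rabs (y - x) < del -> Rabs (u - t) < del ->
  Rabs (F y u - F x t) < eps.
Proof.
  intros HF eps He.
  assert (Hd : forall p q, {dl : posreal | forall y u, Rabs (y - p) < dl -> Rabs (u - q) < dl ->
     Rabs (F y u - F p q) < eps / 2}).
  { intros p q. apply constructive_indefinite_description.
    destruct (HF p q (eps/2)) as [dl [Hdl H1]]; [lra|].
    exists (mkposreal dl Hdl). exact H1. }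
  destruct (compactness_value_2d a b c d (fun p q => mkposreal (proj1_sig (Hd p q) / 2)
                  ltac:(pose proof (cond_pos (proj1_sig (Hd p q))); lra))) as [dd Hdd].
  exists dd; split; [apply cond_pos|].
  intros x t y u Hx Ht Hy Hu.
  specialize (Hdd x t Hx Ht).
  apply NNPP; intro Hc; apply Hdd; intros [p [q [Hp [Hq [H1 [H2 H3]]]]]].
  apply Hc. simpl in H1, H2, H3.
  pose proof (proj2_sig (Hd p q)) as Hdl. simpl in Hdl.
  set (dl := proj1_sig (Hd p q)) in *.
  pose proof (cond_pos dl).
  assert (A1 : Rabs (F x t - F p q) < eps / 2) by (apply Hdl; lra).
  assert (A2 : Rabs (F y u - F p q) < eps / 2).
  { apply Hdl.
    - replace (y - p) with ((y - x) + (x - p)) by ring.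
      eapply Rle_lt_trans; [apply Rabs_triang|]. lra.
    - replace (u - q) with ((u - t) + (t - q)) by ring.
      eapply Rle_lt_trans; [apply Rabs_triang|]. lra. }
  replace (F y u - F x t) with ((F y u - F p q) - (F x t - F p q)) by ring.
  eapply Rle_lt_trans; [apply Rabs_triang|]. rewrite Rabs_Ropp. lra.
Qed.

(* Minimise first in x for each t; uniform continuity makes the partial minimum
   continuous in t. *)
Lemma jointly_continuous_min F a b c d : jointly_continuous F -> a <= b -> c <= d ->
  exists x0 t0, a <= x0 <= b /\ c <= t0 <= d /\
    forall x t, a <= x <= b -> c <= t <= d -> F x0 t0 <= F x t.
Proof.
  intros HF Hab Hcd.
  assert (Hm : forall t, {x | a <= x <= b /\ forall y, a <= y <= b -> F x t <= F y t}).
  { intros t. apply constructive_indefinite_description.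
    destruct (continuity_ab_min (fun y => F y t) a b Hab) as [m [Hm1 Hm2]].
    { intros z _. apply cont_at_continuity_pt. apply jointly_continuous_slice; auto. }
    exists m; split; auto. }
  set (m := fun t => proj1_sig (Hm t)).
  assert (Hm1 : forall t, a <= m t <= b) by (intro t; unfold m; destruct (Hm t); simpl; tauto).
  assert (Hm2 : forall t y, a <= y <= b -> F (m t) t <= F y t)
    by (intros t; unfold m; destruct (Hm t); simpl; tauto).
  assert (Hpsi : forall t, cont_at (fun u => F (m u) u) t).
  { intros t eps He.
    destruct (jointly_continuous_unif F a b (t-1) (t+1) HF eps He) as [del [Hdel H1]].
    exists (Rmin del 1); split; [apply Rmin_pos; lra|].
    intros u Hu. pose proof (Rmin_l del 1). pose proof (Rmin_r del 1).
    assert (Hu3 : t - 1 <= u <= t + 1) by (apply Rabs_def2 in Hu; lra).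
    assert (B1 : Rabs (F (m t) u - F (m t) t) < eps).
    { apply H1; auto; try lra. rewrite Rminus_diag, Rabs_R0; lra. }
    assert (B2 : Rabs (F (m u) t - F (m u) u) < eps).
    { apply H1; auto; try lra. rewrite Rminus_diag, Rabs_R0; lra.
      rewrite Rabs_minus_sym; lra. }
    pose proof (Hm2 t (m u) (Hm1 u)). pose proof (Hm2 u (m t) (Hm1 t)).
    apply Rabs_def2 in B1. apply Rabs_def2 in B2. apply Rabs_def1; lra. }
  destruct (continuity_ab_min (fun u => F (m u) u) c d Hcd) as [t0 [Ht0 Ht0']].
  { intros z _. apply cont_at_continuity_pt. apply Hpsi. }
  exists (m t0), t0. split; [auto|]. split; [auto|].
  intros x t Hx Ht. specialize (Ht0 t Ht). simpl in Ht0.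
  pose proof (Hm2 t x Hx). lra.
Qed.

Lemma jointly_continuous_bounded F a b c d : jointly_continuous F -> a <= b -> c <= d ->
  exists B, forall x t, a <= x <= b -> c <= t <= d -> Rabs (F x t) <= B.
Proof.
  intros HF Hab Hcd.
  destruct (jointly_continuous_min F a b c d HF Hab Hcd) as [x0 [t0 [_ [_ H0]]]].
  destruct (jointly_continuous_min (fun x t => - F x t) a b c d
              (jointly_continuous_opp F HF) Hab Hcd) as [x1 [t1 [_ [_ H1]]]].
  exists (Rmax (Rabs (F x0 t0)) (Rabs (F x1 t1))).
  intros x t Hx Ht. specialize (H0 x t Hx Ht). specialize (H1 x t Hx Ht).
  pose proof (Rmax_l (Rabs (F x0 t0)) (Rabs (F x1 t1))).
  pose proof (Rmax_r (Rabs (F x0 t0)) (Rabs (F x1 t1))).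
  pose proof (Rle_abs (F x1 t1)). pose proof (Rle_abs (- F x0 t0)). rewrite Rabs_Ropp in H4.
  apply Rabs_le; lra.
Qed.

(* Extends f from {c <= t <= d, 0 <= x <= s t} to the whole plane, constantly
   along horizontal and vertical rays. *)
Definition clamp_ext (f : R -> R -> R) (s : R -> R) (c d : R) : R -> R -> R :=
  fun x t => f (clamp 0 (s (clamp c d t)) x) (clamp c d t).

Lemma clamp_ext_eq f s c d x t : c <= t <= d -> 0 <= x <= s t -> clamp_ext f s c d x t = f x t.
Proof. intros Ht Hx. unfold clamp_ext. rewrite (clamp_id c d t Ht). rewrite clamp_id; auto. Qed.

Lemma clamp_ext_clamp f s c d x t : c <= t <= d -> 0 <= s t ->
  clamp_ext f s c d x t = clamp_ext f s c d (clamp 0 (s t) x) t.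
Proof.
  intros Ht Hs. unfold clamp_ext. rewrite (clamp_id c d t Ht).
  rewrite (clamp_id 0 (s t) (clamp 0 (s t) x)); auto. apply clamp_in; auto.
Qed.

Lemma clamp_ext_continuous (A : R -> R -> Prop) f s T c d :
  0 <= c -> c <= d -> d <= T ->
  cont_on (fun t => 0 <= t <= T) s -> (forall t, 0 <= t <= T -> 0 <= s t) ->
  (forall x t, c <= t <= d -> 0 <= x <= s t -> A x t) -> cont2_on A f ->
  jointly_continuous (clamp_ext f s c d).
Proof.
  intros Hc Hcd HdT Hs Hs0 HA Hf x t eps He.
  set (t' := clamp c d t). set (x' := clamp 0 (s t') x).
  assert (Ht' : c <= t' <= d) by (apply clamp_in; auto).
  assert (Hx' : 0 <= x' <= s t') by (apply clamp_in; apply Hs0; lra).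
  destruct (Hf x' t' (HA _ _ Ht' Hx') eps He) as [d1 [Hd1 H1]].
  destruct (Hs t' ltac:(lra) (d1/2) ltac:(lra)) as [d2 [Hd2 H2]].
  exists (Rmin (d1/2) d2); split; [apply Rmin_pos; lra|].
  intros y u Hy Hu. unfold clamp_ext. fold t'. fold x'.
  set (u' := clamp c d u).
  assert (Hu' : c <= u' <= d) by (apply clamp_in; auto).
  assert (Hu1 : Rabs (u' - t') <= Rabs (u - t)) by (apply clamp_lipschitz; auto).
  pose proof (Rmin_l (d1/2) d2). pose proof (Rmin_r (d1/2) d2).
  assert (Hsu : Rabs (s u' - s t') < d1/2) by (apply H2; lra).
  apply H1.
  - apply HA; auto. apply clamp_in. apply Hs0; lra.
  - unfold x'. eapply Rle_lt_trans; [apply clamp_dist; apply Hs0; lra|]. lra.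
  - lra.
Qed.

Lemma cont2_on_subset (A B : R -> R -> Prop) f : (forall x t, A x t -> B x t) ->
  cont2_on B f -> cont2_on A f.
Proof.
  intros HAB Hf x t Hx eps He. destruct (Hf x t (HAB _ _ Hx) eps He) as [d [Hd H1]].
  exists d; split; auto.
Qed.

Lemma cont2_on_minus A f g :
  cont2_on A f -> cont2_on A g -> cont2_on A (fun x t => f x t - g x t).
Proof.
  intros Hf Hg x t Hx eps He.
  destruct (Hf x t Hx (eps/2)) as [d1 [Hd1 H1]]; [lra|].
  destruct (Hg x t Hx (eps/2)) as [d2 [Hd2 H2]]; [lra|].
  exists (Rmin d1 d2); split; [apply Rmin_pos; auto|].
  intros y u Hy Hyu Hu. pose proof (Rmin_l d1 d2). pose proof (Rmin_r d1 d2).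
  assert (A1 := H1 y u Hy ltac:(lra) ltac:(lra)).
  assert (A2 := H2 y u Hy ltac:(lra) ltac:(lra)).
  replace (f y u - g y u - (f x t - g x t)) with ((f y u - f x t) - (g y u - g x t)) by ring.
  eapply Rle_lt_trans; [apply Rabs_triang|]. rewrite Rabs_Ropp. lra.
Qed.

Lemma cont2_on_plus_time A f k : cont2_on A f -> cont2_on A (fun x t => f x t + k * t).
Proof.
  intros Hf x t Hx eps He.
  destruct (Hf x t Hx (eps/2)) as [d1 [Hd1 H1]]; [lra|].
  assert (Hk : 0 < eps / (2 * (Rabs k + 1)))
    by (apply Rdiv_lt_0_compat; [|pose proof (Rabs_pos k)]; lra).
  exists (Rmin d1 (eps / (2 * (Rabs k + 1)))). split; [apply Rmin_pos; auto|].
  intros y u Hy Hyx Hut.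
  pose proof (Rmin_l d1 (eps / (2 * (Rabs k + 1)))).
  pose proof (Rmin_r d1 (eps / (2 * (Rabs k + 1)))).
  assert (A1 := H1 y u Hy ltac:(lra) ltac:(lra)).
  assert (A2 : Rabs k * Rabs (u - t) <= eps / 2).
  { apply Rle_trans with (Rabs k * (eps / (2 * (Rabs k + 1)))).
    - apply Rmult_le_compat_l; [apply Rabs_pos| lra].
    - pose proof (Rabs_pos k). apply (Rmult_le_reg_r (2 * (Rabs k + 1))); [lra|].
      field_simplify; nra. }
  replace (f y u + k * u - (f x t + k * t)) with ((f y u - f x t) + k * (u - t)) by ring.
  eapply Rle_lt_trans; [apply Rabs_triang|]. rewrite Rabs_mult. lra.
Qed.

Lemma cont2_on_slice (A : R -> R -> Prop) f t a b : cont2_on A f ->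
  (forall y, a <= y <= b -> A y t) ->
  forall x, a <= x <= b -> cont_within (fun y => a <= y <= b) (fun y => f y t) x.
Proof.
  intros Hf HA x Hx eps He. destruct (Hf x t (HA x Hx) eps He) as [d [Hd H1]].
  exists d; split; auto. intros u Hu Hux. apply H1; auto. rewrite Rminus_diag, Rabs_R0; auto.
Qed.

Lemma cont2_on_curve (A : R -> R -> Prop) f p c d : cont2_on A f ->
  (forall t, c <= t <= d -> cont_within (fun y => c <= y <= d) p t) ->
  (forall t, c <= t <= d -> A (p t) t) ->
  forall t, c <= t <= d -> cont_within (fun y => c <= y <= d) (fun z => f (p z) z) t.
Proof.
  intros Hf Hp HA t Ht eps He.
  destruct (Hf (p t) t (HA t Ht) eps He) as [d1 [Hd1 H1]].
  destruct (Hp t Ht d1 Hd1) as [d2 [Hd2 H2]].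
  exists (Rmin d1 d2); split; [apply Rmin_pos; auto|].
  intros u Hu Hut. pose proof (Rmin_l d1 d2). pose proof (Rmin_r d1 d2).
  apply H1; [auto | apply H2; auto; lra | lra].
Qed.

Lemma cont2_on_interior_slice (A : R -> R -> Prop) f x t r : 0 < r ->
  (forall y u, Rabs (y - x) < r -> Rabs (u - t) < r -> A y u) ->
  cont2_on A f -> cont_at (fun y => f y t) x.
Proof.
  intros Hr HA Hf eps He.
  assert (Z : forall z, Rabs (z - z) = 0) by (intro; rewrite Rminus_diag, Rabs_R0; auto).
  destruct (Hf x t (HA x t ltac:(rewrite Z; lra) ltac:(rewrite Z; lra)) eps He)
    as [d1 [Hd1 H1]].
  exists (Rmin d1 r); split; [apply Rmin_pos; auto|].
  intros u Hu. pose proof (Rmin_l d1 r). pose proof (Rmin_r d1 r). pose proof (Z t).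
  apply H1; [apply HA| |]; lra.
Qed.

Lemma cont2_on_interior_curve (A : R -> R -> Prop) f p t r : 0 < r ->
  (forall y u, Rabs (y - p t) < r -> Rabs (u - t) < r -> A y u) ->
  cont2_on A f -> cont_at p t -> cont_at (fun u => f (p u) u) t.
Proof.
  intros Hr HA Hf Hp eps He.
  assert (Z : forall z, Rabs (z - z) = 0) by (intro; rewrite Rminus_diag, Rabs_R0; auto).
  destruct (Hf (p t) t (HA (p t) t ltac:(rewrite Z; lra) ltac:(rewrite Z; lra)) eps He)
    as [d1 [Hd1 H1]].
  destruct (Hp (Rmin d1 r) ltac:(apply Rmin_pos; auto)) as [d2 [Hd2 H2]].
  exists (Rmin d2 (Rmin d1 r)); split; [apply Rmin_pos; auto; apply Rmin_pos; auto|].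
  intros u Hu. pose proof (Rmin_l d2 (Rmin d1 r)). pose proof (Rmin_r d2 (Rmin d1 r)).
  pose proof (Rmin_l d1 r). pose proof (Rmin_r d1 r).
  assert (Hpu := H2 u ltac:(lra)).
  apply H1; [apply HA| |]; lra.
Qed.

Lemma locally_Rabs (P : R -> Prop) x d : 0 < d ->
  (forall y, Rabs (y - x) < d -> P y) -> locally x P.
Proof. intros Hd HP. exists (mkposreal d Hd). intros y Hy. apply HP. exact Hy. Qed.

Lemma is_derive_cont_at (f : R -> R) (x l : R) : is_derive f x l -> cont_at f x.
Proof.
  intro H. apply cont_at_continuous.
  exact (@ex_derive_continuous R_AbsRing R_NormedModule f x (ex_intro _ l H)).
Qed.

Lemma deriv_within_is_derive (A : R -> Prop) (f : R -> R) (t l r : R) : 0 < r ->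
  (forall u, Rabs (u - t) < r -> A u) -> deriv_within A f t l -> is_derive f t l.
Proof.
  intros Hr HA Hd. apply is_derive_Reals. intros eps He.
  destruct (Hd (eps/2) ltac:(lra)) as [d [Hd0 H1]].
  assert (Hp : 0 < Rmin d r) by (apply Rmin_pos; auto).
  exists (mkposreal _ Hp). intros h Hh0 Hh. simpl in Hh.
  pose proof (Rmin_l d r). pose proof (Rmin_r d r).
  replace (t + h - t) with h in H1 by ring.
  assert (Hu : Rabs (t + h - t) < r) by (replace (t+h-t) with h by ring; lra).
  specialize (H1 (t+h) (HA _ Hu) ltac:(replace (t+h-t) with h by ring; lra)).
  replace (t + h - t) with h in H1 by ring.
  replace ((f (t + h) - f t) / h - l) with ((f (t + h) - f t - l * h) / h) by (field; auto).
  unfold Rdiv. rewrite Rabs_mult, Rabs_inv.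
  assert (0 < Rabs h) by (apply Rabs_pos_lt; auto).
  apply (Rmult_lt_reg_r (Rabs h)); auto. rewrite Rmult_assoc, Rinv_l by lra. nra.
Qed.

Lemma MVT_cont_within (f df : R -> R) (a b : R) : a < b ->
  (forall x, a <= x <= b -> cont_within (fun y => a <= y <= b) f x) ->
  (forall x, a < x < b -> is_derive f x (df x)) ->
  exists c, a < c < b /\ f b - f a = df c * (b - a).
Proof.
  intros Hab Hf Hd.
  set (g := fun y => f (clamp a b y)).
  assert (Hg : forall c, a < c < b -> derivable_pt_lim g c (df c)).
  { intros c Hc. apply is_derive_Reals. apply is_derive_ext_loc with (f := f); [|apply Hd; auto].
    apply locally_Rabs with (d := Rmin (c - a) (b - c)); [apply Rmin_pos; lra|].
    intros y Hy.
    pose proof (Rmin_l (c-a) (b-c)). pose proof (Rmin_r (c-a) (b-c)).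
    apply Rabs_def2 in Hy. unfold g. rewrite clamp_id; auto; lra. }
  destruct (MVT g id a b (fun c P => exist _ (df c) (Hg c P)) (fun c _ => derivable_pt_id c) Hab)
    as [c [P HP]].
  - intros c _. apply cont_at_continuity_pt. apply cont_within_clamp; auto; lra.
  - intros c _. apply derivable_continuous_pt. apply derivable_pt_id.
  - exists c; split; auto. simpl in HP. rewrite derive_pt_id in HP.
    unfold g, id in HP. rewrite !clamp_id in HP by lra. lra.
Qed.

(* At an interior minimum f' vanishes; if f'' were negative, f' < 0 just to the
   right and the mean value theorem would make f decrease there. *)
Lemma local_min_second_deriv_nonneg (f f1 : R -> R) (x0 l p q : R) : p < x0 < q ->
  (forall y, p < y < q -> f x0 <= f y) ->
  (forall y, p < y < q -> is_derive f y (f1 y)) ->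
  is_derive f1 x0 l -> 0 <= l.
Proof.
  intros Hx Hmin Hd Hd1.
  assert (Hf0 : f1 x0 = 0).
  { assert (Hl : derivable_pt_lim f x0 (f1 x0)) by (apply is_derive_Reals; apply Hd; auto).
    pose proof (deriv_minimum f p q x0 (exist _ (f1 x0) Hl) ltac:(lra) ltac:(lra)) as HH.
    simpl in HH. apply HH. intros y Hy1 Hy2. apply Hmin; lra. }
  destruct (Rle_lt_dec 0 l) as [Hl|Hl]; auto. exfalso.
  apply is_derive_Reals in Hd1.
  destruct (Hd1 (- l / 2) ltac:(lra)) as [del Hdel]. pose proof (cond_pos del).
  set (h := Rmin (del/2) ((q - x0)/2)).
  assert (Hh1 : 0 < h) by (apply Rmin_pos; lra).
  assert (Hh2 : h < del) by (pose proof (Rmin_l (del/2) ((q - x0)/2)); unfold h in *; lra).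
  assert (Hh3 : h < q - x0) by (pose proof (Rmin_r (del/2) ((q - x0)/2)); unfold h in *; lra).
  assert (Hneg : forall k, 0 < k <= h -> f1 (x0 + k) < 0).
  { intros k Hk.
    specialize (Hdel k ltac:(lra) ltac:(rewrite Rabs_right; lra)).
    rewrite Hf0, Rminus_0_r in Hdel. apply Rabs_def2 in Hdel.
    assert (f1 (x0 + k) / k < 0) by lra.
    assert (f1 (x0 + k) = f1 (x0 + k) / k * k) by (field; lra).
    nra. }
  destruct (MVT_cont_within f f1 x0 (x0 + h)) as [c [Hc Hfc]]; [lra| | |].
  - intros x Hx' eps He.
    destruct (is_derive_cont_at f x (f1 x) ltac:(apply Hd; lra) eps He) as [d [Hd0 H1]].
    exists d; split; auto.
  - intros x Hx'. apply Hd; lra.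
  - pose proof (Hneg (c - x0) ltac:(lra)). replace (x0 + (c - x0)) with c in H0 by ring.
    pose proof (Hmin (x0 + h) ltac:(lra)). nra.
Qed.

Lemma left_min_deriv_le (g : R -> R) (k t0 eps eta : R) : 0 < eta ->
  is_derive g t0 k ->
  (forall u, t0 - eta < u < t0 -> g t0 + eps * t0 <= g u + eps * u) ->
  k <= - eps.
Proof.
  intros Heta Hd Hm. destruct (Rle_lt_dec k (-eps)) as [Hk|Hk]; auto. exfalso.
  apply is_derive_Reals in Hd.
  destruct (Hd ((k + eps)/2) ltac:(lra)) as [del Hdel].
  set (h := - Rmin (del/2) (eta/2)).
  assert (Hh1 : 0 < Rmin (del/2) (eta/2)) by (apply Rmin_pos; [pose proof (cond_pos del)|]; lra).
  pose proof (Rmin_l (del/2) (eta/2)). pose proof (Rmin_r (del/2) (eta/2)).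
  pose proof (cond_pos del).
  assert (Hh : Rabs h < del) by (unfold h; rewrite Rabs_left; lra).
  specialize (Hdel h ltac:(unfold h; lra) Hh). apply Rabs_def2 in Hdel.
  specialize (Hm (t0 + h) ltac:(unfold h; lra)).
  set (Q := (g (t0 + h) - g t0) / h) in *.
  assert (HQ : Q * h = g (t0 + h) - g t0) by (unfold Q; field; unfold h; lra).
  assert (h < 0) by (unfold h; lra).
  nra.
Qed.

(* A nonnegative function vanishing at an endpoint has an inward-pointing slope
   there: otherwise the mean value theorem on a short interval makes it negative. *)
Lemma nonneg_zero_right_deriv_nonpos (f df : R -> R) a b : a < b ->
  (forall x, a <= x <= b -> cont_within (fun y => a <= y <= b) f x) ->
  (forall x, a < x < b -> is_derive f x (df x)) ->
  cont_within (fun y => a <= y <= b) df b ->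
  f b = 0 -> (forall x, a <= x <= b -> 0 <= f x) -> df b <= 0.
Proof.
  intros Hab Hf Hd Hdf Hb Hpos.
  destruct (Rle_lt_dec (df b) 0) as [ok|Hk]; auto. exfalso.
  destruct (Hdf (df b) Hk) as [d [Hd0 H1]].
  set (c := Rmax (b - d/2) ((a + b) / 2)).
  assert (Hc1 : b - d/2 <= c) by apply Rmax_l.
  assert (Hc2 : (a + b) / 2 <= c) by apply Rmax_r.
  assert (Hc : c < b) by (unfold c, Rmax; destruct Rle_dec; lra).
  clearbody c.
  destruct (MVT_cont_within f df c b Hc) as [m [Hm Hfm]].
  - intros x Hx. apply (cont_within_subset _ (fun y => a <= y <= b)); [intros; lra|].
    apply Hf; lra.
  - intros x Hx. apply Hd. lra.
  - assert (Hmp : Rabs (df m - df b) < df b)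
      by (apply H1; [lra| rewrite Rabs_left; lra]).
    apply Rabs_def2 in Hmp. pose proof (Hpos c ltac:(lra)). nra.
Qed.

Lemma nonneg_zero_left_deriv_nonneg (f df : R -> R) a b : a < b ->
  (forall x, a <= x <= b -> cont_within (fun y => a <= y <= b) f x) ->
  (forall x, a < x < b -> is_derive f x (df x)) ->
  cont_within (fun y => a <= y <= b) df a ->
  f a = 0 -> (forall x, a <= x <= b -> 0 <= f x) -> 0 <= df a.
Proof.
  intros Hab Hf Hd Hdf Ha Hpos.
  destruct (Rle_lt_dec 0 (df a)) as [ok|Hk]; auto. exfalso.
  destruct (Hdf (- df a) ltac:(lra)) as [d [Hd0 H1]].
  set (c := Rmin (a + d/2) ((a + b) / 2)).
  assert (Hc1 : c <= a + d/2) by apply Rmin_l.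
  assert (Hc2 : c <= (a + b) / 2) by apply Rmin_r.
  assert (Hc : a < c) by (unfold c, Rmin; destruct Rle_dec; lra).
  clearbody c.
  destruct (MVT_cont_within f df a c Hc) as [m [Hm Hfm]].
  - intros x Hx. apply (cont_within_subset _ (fun y => a <= y <= b)); [intros; lra|].
    apply Hf; lra.
  - intros x Hx. apply Hd. lra.
  - assert (Hmp : Rabs (df m - df a) < - df a)
      by (apply H1; [lra| rewrite Rabs_right; lra]).
    apply Rabs_def2 in Hmp. pose proof (Hpos c ltac:(lra)). nra.
Qed.

Lemma boundary_bounded T s c d : 0 <= c <= d -> d <= T ->
  cont_on (fun t => 0 <= t <= T) s -> exists M, 0 <= M /\ forall t, c <= t <= d -> Rabs (s t) <= M.
Proof.
  intros Hcd HdT Hs.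
  destruct (cont_within_bounded s c d) as [M HM]; [lra| |].
  { intros x Hx. apply (cont_within_subset _ (fun t => 0 <= t <= T)); [intros; lra|].
    apply Hs; lra. }
  exists M. split; auto. pose proof (HM c ltac:(lra)). pose proof (Rabs_pos (s c)). lra.
Qed.

Section Region.

Variables (T c d : R) (s : R -> R) (A : R -> R -> Prop) (f : R -> R -> R).
Hypothesis c_d_T : 0 <= c <= d /\ d <= T.
Hypothesis s_cont : cont_on (fun t => 0 <= t <= T) s.
Hypothesis s_nonneg : forall t, 0 <= t <= T -> 0 <= s t.
Hypothesis region_A : forall x t, c <= t <= d -> 0 <= x <= s t -> A x t.
Hypothesis f_cont : cont2_on A f.

Lemma region_ext_continuous : jointly_continuous (clamp_ext f s c d).
Proof. apply (clamp_ext_continuous A f s T); auto; lra. Qed.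

Lemma region_ext_bounded : exists B, 0 <= B /\
  forall x t, c <= t <= d -> Rabs (clamp_ext f s c d x t) <= B.
Proof.
  destruct (boundary_bounded T s c d) as [M [HM0 HM]]; try tauto.
  destruct (jointly_continuous_bounded _ 0 M c d region_ext_continuous HM0 ltac:(lra)) as [B HB].
  exists B. split.
  - pose proof (HB 0 c ltac:(lra) ltac:(lra)). pose proof (Rabs_pos (clamp_ext f s c d 0 c)). lra.
  - intros x t Ht. pose proof (s_nonneg t ltac:(lra)).
    rewrite clamp_ext_clamp by auto. apply HB; auto.
    pose proof (clamp_in 0 (s t) x H). pose proof (HM t Ht). pose proof (Rle_abs (s t)). lra.
Qed.

Lemma region_bounded : exists B, 0 <= B /\
  forall x t, c <= t <= d -> 0 <= x <= s t -> Rabs (f x t) <= B.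
Proof.
  destruct region_ext_bounded as [B [HB0 HB]]. exists B. split; auto.
  intros x t Ht Hx. rewrite <- (clamp_ext_eq f s c d x t) by auto. auto.
Qed.

Lemma region_unif eps : 0 < eps -> exists del, 0 < del /\
  forall x t y u, c <= t <= d -> 0 <= x <= s t -> c <= u <= d -> 0 <= y <= s u ->
    Rabs (y - x) < del -> Rabs (u - t) < del -> Rabs (f y u - f x t) < eps.
Proof.
  intros Heps.
  destruct (boundary_bounded T s c d) as [M [HM0 HM]]; try tauto.
  destruct (jointly_continuous_unif _ 0 M c d region_ext_continuous eps Heps) as [del [Hdel H1]].
  exists del. split; auto. intros x t y u Ht Hx Hu Hy Hyx Hut.
  rewrite <- (clamp_ext_eq f s c d x t), <- (clamp_ext_eq f s c d y u) by auto.
  apply H1; auto. pose proof (HM t Ht). pose proof (Rle_abs (s t)). lra.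
Qed.

Lemma region_min : exists x0 t0, c <= t0 <= d /\ 0 <= x0 <= s t0 /\
  forall x t, c <= t <= d -> 0 <= x <= s t -> f x0 t0 <= f x t.
Proof.
  destruct (boundary_bounded T s c d) as [M [HM0 HM]]; try tauto.
  destruct (jointly_continuous_min _ 0 M c d region_ext_continuous HM0 ltac:(lra))
    as [x0 [t0 [Hx0 [Ht0 Hmin]]]].
  pose proof (s_nonneg t0 ltac:(lra)) as Hs0.
  pose proof (clamp_in 0 (s t0) x0 Hs0) as Hx1.
  exists (clamp 0 (s t0) x0), t0. split; [auto| split; [auto|]].
  intros x t Ht Hx.
  rewrite <- (clamp_ext_eq f s c d x t), <- (clamp_ext_eq f s c d _ t0), <- clamp_ext_clamp
    by auto.
  apply Hmin; auto. pose proof (HM t Ht). pose proof (Rle_abs (s t)). lra.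
Qed.

End Region.

(** * The maximum principle *)

Definition heat_sol_on (s : R -> R) (T : R) (W Wx Wxx Wt : R -> R -> R) : Prop :=
  forall x t, Qdom s T x t ->
    is_derive (fun y => W y t) x (Wx x t) /\ is_derive (fun y => Wx y t) x (Wxx x t) /\
    is_derive (fun u => W x u) t (Wt x t) /\ Wt x t = Wxx x t.

Lemma heat_sol_on_minus s1 s2 T W1 Wx1 Wxx1 Wt1 W2 Wx2 Wxx2 Wt2 :
  (forall x t, Qdom s1 T x t -> Qdom s2 T x t) ->
  heat_sol_on s1 T W1 Wx1 Wxx1 Wt1 -> heat_sol_on s2 T W2 Wx2 Wxx2 Wt2 ->
  heat_sol_on s1 T (fun x t => W2 x t - W1 x t) (fun x t => Wx2 x t - Wx1 x t)
    (fun x t => Wxx2 x t - Wxx1 x t) (fun x t => Wt2 x t - Wt1 x t).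
Proof.
  intros Hsub H1 H2 x t Hq.
  destruct (H1 x t Hq) as [D1 [D2 [D3 E]]]. destruct (H2 x t (Hsub x t Hq)) as [D1' [D2' [D3' E']]].
  split; [|split; [|split]].
  - apply (is_derive_minus (fun y => W2 y t) (fun y => W1 y t)); auto.
  - apply (is_derive_minus (fun y => Wx2 y t) (fun y => Wx1 y t)); auto.
  - apply (is_derive_minus (fun u => W2 x u) (fun u => W1 x u)); auto.
  - rewrite E, E'. reflexivity.
Qed.

Lemma boundary_nonneg T s : s 0 = 0 -> (forall t, 0 < t <= T -> 0 < s t) ->
  forall t, 0 <= t <= T -> 0 <= s t.
Proof.
  intros H0 Hp t Ht. destruct (Req_dec t 0) as [->|Hne]; [lra|]. apply Rlt_le, Hp; lra.
Qed.

Section MinimumPrinciple.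

Variables (T : R) (s : R -> R) (W Wx Wxx Wt : R -> R -> R).
Hypothesis T_pos : 0 < T.
Hypothesis s_cont : cont_on (fun t => 0 <= t <= T) s.
Hypothesis s_zero : s 0 = 0.
Hypothesis s_pos : forall t, 0 < t <= T -> 0 < s t.
Hypothesis W_cont : cont2_on (Qbar s T) W.
Hypothesis W_heat : heat_sol_on s T W Wx Wxx Wt.

(* Where W + eps t is minimal over the past, W_xx >= 0 and W_t <= - eps, which
   contradicts W_t = W_xx. *)
Lemma heat_no_interior_min x0 t0 eps : 0 < eps -> Qdom s T x0 t0 ->
  (forall x t, 0 <= t <= t0 -> 0 <= x <= s t -> W x0 t0 + eps * t0 <= W x t + eps * t) ->
  False.
Proof.
  intros Heps [Hx0 Ht0] Hmin.
  destruct (W_heat x0 t0 (conj Hx0 Ht0)) as [Hd1 [Hd2 [Hd3 Heq]]].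
  assert (Hxx : 0 <= Wxx x0 t0).
  { apply (local_min_second_deriv_nonneg (fun y => W y t0) (fun y => Wx y t0) x0 _ 0 (s t0));
      auto; try lra.
    - intros y Hy. pose proof (Hmin y t0 ltac:(lra) ltac:(lra)). lra.
    - intros y Hy. apply W_heat. split; lra. }
  destruct (s_cont t0 ltac:(split_lra) (s t0 - x0) ltac:(lra)) as [eta [Heta Hs]].
  assert (Ht : Wt x0 t0 <= - eps).
  { apply (left_min_deriv_le (fun u => W x0 u) _ t0 eps (Rmin eta t0)); auto.
    - apply Rmin_pos; lra.
    - intros u Hu. pose proof (Rmin_l eta t0). pose proof (Rmin_r eta t0).
      assert (Hsu : Rabs (s u - s t0) < s t0 - x0)
        by (apply Hs; [lra| rewrite Rabs_left; lra]).
      apply Rabs_def2 in Hsu. apply Hmin; lra. }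
  lra.
Qed.

(* A negative value of W would make the minimum of W + eps t over the region up to
   that time negative, hence attained off the parabolic boundary. *)
Lemma heat_min_principle_before_T :
  (forall t, 0 <= t <= T -> 0 <= W 0 t) ->
  (forall t, 0 <= t <= T -> 0 <= W (s t) t) ->
  forall x1 t1, 0 <= t1 < T -> 0 <= x1 <= s t1 -> 0 <= W x1 t1.
Proof.
  intros Hb0 Hbs x1 t1 Ht1 Hx1.
  destruct (Rle_lt_dec 0 (W x1 t1)) as [ok|Hneg]; auto. exfalso.
  set (eps := - W x1 t1 / (2 * (t1 + 1))).
  assert (Heps : 0 < eps) by (unfold eps; apply Rdiv_lt_0_compat; lra).
  assert (Heps2 : W x1 t1 + eps * t1 < 0).
  { assert (E : eps * (2 * (t1 + 1)) = - W x1 t1) by (unfold eps; field; lra). nra. }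
  destruct (region_min T 0 t1 s (Qbar s T) (fun x t => W x t + eps * t) ltac:(lra) s_cont
              (boundary_nonneg T s s_zero s_pos) ltac:(intros x t Ht Hx; split; lra)
              (cont2_on_plus_time _ W eps W_cont)) as [x0 [t0 [Ht0 [Hx0 Hmin]]]].
  pose proof (Hmin x1 t1 ltac:(lra) Hx1) as Hneg0.
  destruct (Req_dec t0 0) as [Ht00|Ht00].
  { subst t0. rewrite s_zero in Hx0. replace x0 with 0 in Hneg0 by lra.
    specialize (Hb0 0 ltac:(lra)). lra. }
  destruct (Req_dec x0 0) as [Hx00|Hx00].
  { rewrite Hx00 in Hneg0. specialize (Hb0 t0 ltac:(lra)). nra. }
  destruct (Req_dec x0 (s t0)) as [Hxs|Hxs].
  { rewrite Hxs in Hneg0. specialize (Hbs t0 ltac:(lra)). nra. }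
  apply (heat_no_interior_min x0 t0 eps); [auto| split; lra|].
  intros x t Ht Hx. apply Hmin; lra.
Qed.

Lemma heat_min_principle :
  (forall t, 0 <= t <= T -> 0 <= W 0 t) ->
  (forall t, 0 <= t <= T -> 0 <= W (s t) t) ->
  forall x t, Qbar s T x t -> 0 <= W x t.
Proof.
  intros Hb0 Hbs x t [Ht Hx].
  assert (Hs0 := boundary_nonneg T s s_zero s_pos).
  destruct (Rlt_le_dec t T) as [HtT|HtT]; [apply heat_min_principle_before_T; auto; lra|].
  assert (t = T) by lra. subst t.
  destruct (Rle_lt_dec 0 (W x T)) as [ok|Hneg]; auto. exfalso.
  (* W(x,T) < 0 propagates by continuity to a point with t < T. *)
  destruct (W_cont x T ltac:(split; lra) (- W x T) ltac:(lra)) as [d [Hd H1]].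
  destruct (s_cont T ltac:(lra) d Hd) as [d2 [Hd2 H2]].
  set (m := Rmin (Rmin d d2 / 2) (T/2)).
  assert (Hmm : 0 < Rmin d d2) by (apply Rmin_pos; lra).
  pose proof (Rmin_l (Rmin d d2 / 2) (T/2)). pose proof (Rmin_r (Rmin d d2 / 2) (T/2)).
  pose proof (Rmin_l d d2). pose proof (Rmin_r d d2).
  assert (Hmp : 0 < m) by (apply Rmin_pos; lra).
  set (u := T - m).
  assert (Hu : 0 < u < T) by (unfold u, m in *; lra).
  assert (Hut : Rabs (u - T) < d) by (unfold u; rewrite Rabs_left; unfold m in *; lra).
  assert (Hsu : Rabs (s u - s T) < d)
    by (apply H2; [lra| unfold u; rewrite Rabs_left; unfold m in *; lra]).
  set (y := Rmin x (s u)).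
  assert (Hy : 0 <= y <= s u).
  { unfold y, Rmin. destruct Rle_dec; pose proof (Hs0 u ltac:(lra)); lra. }
  assert (Hyx : Rabs (y - x) < d).
  { apply Rabs_def2 in Hsu. unfold y, Rmin. destruct Rle_dec; apply Rabs_def1; lra. }
  specialize (H1 y u ltac:(split; lra) Hyx Hut).
  pose proof (heat_min_principle_before_T Hb0 Hbs y u ltac:(lra) Hy).
  apply Rabs_def2 in H1. lra.
Qed.

End MinimumPrinciple.

(** * The mass balance *)

Lemma strip_neighbourhood T s tau al be : 0 < tau < T -> 0 < al -> al < be -> be < 1 ->
  cont_on (fun t => 0 <= t <= T) s -> 0 < s tau ->
  exists rho, 0 < rho /\ forall x y, al * s tau - rho <= x <= be * s tau + rho ->
    Rabs (y - tau) <= rho -> Qdom s T x y.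
Proof.
  intros Ht Hal Halbe Hbe Hs Hst.
  destruct (Hs tau ltac:(lra) ((1 - be) * s tau / 2) ltac:(nra)) as [d [Hd H1]].
  set (rho := Rmin (Rmin (al * s tau / 2) ((1 - be) * s tau / 4))
                   (Rmin (Rmin (tau/2) ((T - tau)/2)) (d/2))).
  assert (R1 : rho <= al * s tau / 2)
    by (unfold rho; repeat (eapply Rle_trans; [apply Rmin_l|]); lra).
  assert (R2 : rho <= (1 - be) * s tau / 4)
    by (unfold rho; eapply Rle_trans; [apply Rmin_l|]; apply Rmin_r).
  assert (R3 : rho <= tau / 2)
    by (unfold rho; eapply Rle_trans; [apply Rmin_r|]; eapply Rle_trans; [apply Rmin_l|];
        apply Rmin_l).
  assert (R4 : rho <= (T - tau) / 2)
    by (unfold rho; eapply Rle_trans; [apply Rmin_r|]; eapply Rle_trans; [apply Rmin_l|];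
        apply Rmin_r).
  assert (R5 : rho <= d / 2) by (unfold rho; eapply Rle_trans; [apply Rmin_r|]; apply Rmin_r).
  assert (R0 : 0 < rho) by (unfold rho; repeat apply Rmin_pos; nra).
  clearbody rho.
  exists rho; split; auto. intros x y Hx Hy. apply Rabs_le_between in Hy.
  assert (Hsy : Rabs (s y - s tau) < (1 - be) * s tau / 2)
    by (apply H1; [split_lra| apply Rabs_def1; lra]).
  apply Rabs_def2 in Hsy.
  split; split; nra.
Qed.

(* The data of FBDP_sol together with the boundary derivative ds and the second
   derivatives Uxx, Ut that FBDP_sol only asserts to exist. *)
Record fixed_boundary_sol {T : R} {s ds : R -> R} {U Ux Uxx Ut : R -> R -> R} : Prop := {
  fb_T_pos : 0 < T;
  fb_s_cont : cont_on (fun t => 0 <= t <= T) s;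
  fb_s_zero : s 0 = 0;
  fb_s_pos : forall t, 0 < t <= T -> 0 < s t;
  fb_s_deriv : forall t, 0 < t <= T -> deriv_within (fun u => 0 < u <= T) s t (ds t);
  fb_ds_cont : cont_on (fun t => 0 < t <= T) ds;
  fb_U_cont : cont2_on (Qbar s T) U;
  fb_heat : heat_sol_on s T U Ux Uxx Ut;
  fb_Uxx_cont : cont2_on (Qdom s T) Uxx;
  fb_Ut_cont : cont2_on (Qdom s T) Ut;
  fb_Ux_cont : cont2_on (Qbar' s T) Ux;
  fb_U_right : forall t, 0 <= t <= T -> U (s t) t = 0 }.
Arguments fixed_boundary_sol : clear implicits.

Lemma fixed_boundary_sol_of_FBDP T s g U Ux : 0 < T -> boundary_fn T s ->
  FBDP_sol T s g U Ux ->
  exists ds Uxx Ut, fixed_boundary_sol T s ds U Ux Uxx Ut /\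
    (forall t, 0 <= t <= T -> U 0 t = g t) /\ U 0 0 = 0.
Proof.
  intros HT [Hs [[ds [Hds Hdsc]] [Hs0 Hsp]]]
    [Uxx [Ut [HU [Hder [_ [HUxx [HUt [HUx [Hpde [HU00 [Hbd Hg]]]]]]]]]]].
  exists ds, Uxx, Ut. split; [|split; auto].
  constructor; auto.
  intros x t Hq. destruct (Hder x t Hq) as [D1 [D2 D3]]. auto.
Qed.

Section Mass.

Variables (T : R) (s ds : R -> R) (U Ux Uxx Ut : R -> R -> R).
Hypothesis Hsol : fixed_boundary_sol T s ds U Ux Uxx Ut.

Definition mass t : R := RInt (fun x => U x t) 0 (s t).

Definition flux_gap t := Ux (s t) t - Ux 0 t.

(* Mass of the inner strip a s(t) <= x <= (1 - a) s(t), where U is smooth enough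
   to differentiate under the integral sign, and its Leibniz-rule derivative. *)
Definition strip_mass a t : R := RInt (fun x => U x t) (a * s t) ((1 - a) * s t).

Definition strip_mass_rate a t :=
  Ux ((1 - a) * s t) t - Ux (a * s t) t
  + U ((1 - a) * s t) t * ((1 - a) * ds t) - U (a * s t) t * (a * ds t).

Lemma U_derive_x x t : Qdom s T x t -> is_derive (fun y => U y t) x (Ux x t).
Proof. intros Hq. apply (fb_heat Hsol x t Hq). Qed.

Lemma Ux_derive_x x t : Qdom s T x t -> is_derive (fun y => Ux y t) x (Uxx x t).
Proof. intros Hq. apply (fb_heat Hsol x t Hq). Qed.

Lemma U_derive_t x t : Qdom s T x t -> is_derive (fun u => U x u) t (Ut x t).
Proof. intros Hq. apply (fb_heat Hsol x t Hq). Qed.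

Lemma heat_eq x t : Qdom s T x t -> Ut x t = Uxx x t.
Proof. intros Hq. apply (fb_heat Hsol x t Hq). Qed.

Lemma s_nonneg t : 0 <= t <= T -> 0 <= s t.
Proof. apply boundary_nonneg; [apply (fb_s_zero Hsol)| apply (fb_s_pos Hsol)]. Qed.

Lemma s_is_derive tau : 0 < tau < T -> is_derive s tau (ds tau).
Proof.
  intros Ht.
  apply (deriv_within_is_derive (fun u => 0 < u <= T) s tau (ds tau) (Rmin tau (T - tau))).
  - apply Rmin_pos; lra.
  - intros u Hu. pose proof (Rmin_l tau (T-tau)). pose proof (Rmin_r tau (T-tau)).
    apply Rabs_def2 in Hu. lra.
  - apply (fb_s_deriv Hsol); lra.
Qed.

Lemma Ut_continuity_2d x t r : 0 < r ->
  (forall y u, Rabs (y - x) < r -> Rabs (u - t) < r -> Qdom s T y u) ->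
  continuity_2d_pt (fun u v => Derive (fun z => U v z) u) t x.
Proof.
  intros Hr Hbox eps.
  assert (HDer : forall y u, Qdom s T y u -> Derive (fun z => U y z) u = Ut y u)
    by (intros y u Hq; apply is_derive_unique, U_derive_t, Hq).
  assert (Z : forall z, Rabs (z - z) = 0) by (intro; rewrite Rminus_diag, Rabs_R0; auto).
  assert (Hq : Qdom s T x t) by (apply Hbox; rewrite Z; lra).
  destruct (fb_Ut_cont Hsol x t Hq eps (cond_pos eps)) as [d [Hd H1]].
  assert (Hp : 0 < Rmin d r) by (apply Rmin_pos; lra).
  exists (mkposreal _ Hp). intros u v Hu Hv. simpl in Hu, Hv.
  pose proof (Rmin_l d r). pose proof (Rmin_r d r).
  rewrite !HDer by (auto; apply Hbox; lra).
  apply H1; [apply Hbox| |]; lra.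
Qed.

Lemma heat_integral_in_x tau p q rho : 0 < rho -> p <= q ->
  (forall y u, p - rho <= y <= q + rho -> Rabs (u - tau) <= rho -> Qdom s T y u) ->
  RInt (fun x => Derive (fun u => U x u) tau) p q = Ux q tau - Ux p tau.
Proof.
  intros Hr Hpq Hbox.
  assert (Z : Rabs (tau - tau) = 0) by (rewrite Rminus_diag, Rabs_R0; auto).
  assert (Hin : forall x, Rmin p q <= x <= Rmax p q -> Qdom s T x tau)
    by (intros x Hx; rewrite Rmin_left, Rmax_right in Hx by lra; apply Hbox; lra).
  rewrite (RInt_ext _ (fun x => Uxx x tau))
    by (intros x Hx; rewrite <- heat_eq by (apply Hin; lra);
        apply is_derive_unique, U_derive_t, Hin; lra).
  apply is_RInt_unique.
  apply (@is_RInt_derive R_CompleteNormedModule (fun x => Ux x tau) (fun x => Uxx x tau)).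
  - intros x Hx. apply Ux_derive_x, Hin, Hx.
  - intros x Hx. rewrite Rmin_left, Rmax_right in Hx by lra. apply cont_at_continuous.
    apply (cont2_on_interior_slice (Qdom s T) Uxx x tau rho Hr); [|apply (fb_Uxx_cont Hsol)].
    intros y u Hy Hu. apply Rabs_def2 in Hy. apply Hbox; lra.
Qed.


Lemma U_continuous_x x t : Qdom s T x t -> continuous (fun z => U z t) x.
Proof.
  intros Hq. apply (@ex_derive_continuous R_AbsRing R_NormedModule).
  exists (Ux x t). apply U_derive_x, Hq.
Qed.

Lemma ex_RInt_U_box tau p q rho :
  (forall y u, p - rho <= y <= q + rho -> Rabs (u - tau) <= rho -> Qdom s T y u) ->
  forall y p' q', Rabs (y - tau) <= rho ->
    p - rho <= p' <= q + rho -> p - rho <= q' <= q + rho -> ex_RInt (fun z => U z y) p' q'.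
Proof.
  intros Hbox y p' q' Hy Hp Hq. apply (@ex_RInt_continuous R_CompleteNormedModule).
  intros z Hz. apply U_continuous_x, Hbox; auto. split.
  - eapply Rle_trans; [|apply Hz]. apply Rmin_glb; lra.
  - eapply Rle_trans; [apply Hz|]. apply Rmax_lub; lra.
Qed.

Lemma strip_mass_is_derive a tau : 0 < a < 1/2 -> 0 < tau < T ->
  is_derive (strip_mass a) tau (strip_mass_rate a tau).
Proof.
  intros Ha Ht.
  assert (Hst : 0 < s tau) by (apply (fb_s_pos Hsol); lra).
  destruct (strip_neighbourhood T s tau a (1-a) Ht ltac:(lra) ltac:(lra) ltac:(lra)
              (fb_s_cont Hsol) Hst) as [rho [Hrho Hbox]].
  set (S := s tau) in *.
  assert (HaS : a * S < (1 - a) * S) by nra.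
  assert (Hrho2 : 0 < rho / 2) by lra.
  assert (HCD : forall x' t', Rabs (x' - tau) < rho / 2 ->
      a * S - rho/2 <= t' <= (1 - a) * S + rho/2 ->
      continuity_2d_pt (fun u v => Derive (fun z => U v z) u) x' t').
  { intros x' t' Hx' Ht'. apply (Ut_continuity_2d t' x' (rho/2)); auto.
    intros y u Hy Hu. apply Rabs_def2 in Hy. apply Rabs_def2 in Hu. apply Rabs_def2 in Hx'.
    apply Hbox; [lra| apply Rabs_le; lra]. }
  assert (HcU : forall x, a * S <= x <= (1 - a) * S -> continuity_pt (fun z => U z tau) x).
  { intros x Hx. apply continuity_pt_filterlim, U_continuous_x, Hbox;
      [| rewrite Rminus_diag, Rabs_R0]; lra. }
  pose proof (ex_RInt_U_box tau _ _ rho Hbox) as HexU.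
  assert (HI : RInt (fun x => Derive (fun u => U x u) tau) (a * S) ((1 - a) * S)
               = Ux ((1 - a) * S) tau - Ux (a * S) tau)
    by (apply (heat_integral_in_x tau _ _ rho); auto; lra).
  unfold strip_mass_rate. fold S.
  replace (Ux ((1 - a) * S) tau - Ux (a * S) tau +
     U ((1 - a) * S) tau * ((1 - a) * ds tau) - U (a * S) tau * (a * ds tau))
    with (RInt (fun x => Derive (fun u => U x u) tau) (a * S) ((1 - a) * S) +
       - U (a * S) tau * (a * ds tau) + U ((1 - a) * S) tau * ((1 - a) * ds tau))
    by (rewrite HI; ring).
  pose proof (s_is_derive tau Ht) as Hsd.
  apply (is_derive_RInt_param_bound_comp (fun t x => U x t) (fun t => a * s t)
           (fun t => (1 - a) * s t) tau (a * ds tau) ((1 - a) * ds tau)); fold S.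
  - apply locally_Rabs with (d := rho); auto. intros y Hy. apply HexU; lra.
  - exists (mkposreal _ Hrho2). apply locally_Rabs with (d := rho); auto. intros y Hy.
    simpl. apply HexU; lra.
  - exists (mkposreal _ Hrho2). apply locally_Rabs with (d := rho); auto. intros y Hy.
    simpl. apply HexU; lra.
  - apply is_derive_scal; auto.
  - apply is_derive_scal; auto.
  - exists (mkposreal _ Hrho2). apply locally_Rabs with (d := rho); auto. intros y Hy x Hx.
    simpl in Hx. rewrite Rmin_left, Rmax_right in Hx by lra.
    exists (Ut x y). apply U_derive_t, Hbox; lra.
  - intros x Hx. rewrite Rmin_left, Rmax_right in Hx by lra.
    apply HCD; [rewrite Rminus_diag, Rabs_R0|]; lra.
  - exists (mkposreal _ Hrho2). intros u v Hu Hv. simpl in Hu, Hv.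
    apply HCD; auto. apply Rabs_def2 in Hv; lra.
  - exists (mkposreal _ Hrho2). intros u v Hu Hv. simpl in Hu, Hv.
    apply HCD; auto. apply Rabs_def2 in Hv; lra.
  - apply HcU; lra.
  - apply HcU; lra.
Qed.

Lemma strip_mass_rate_cont a tau : 0 < a < 1/2 -> 0 < tau < T ->
  cont_at (strip_mass_rate a) tau.
Proof.
  intros Ha Ht.
  assert (Hst : 0 < s tau) by (apply (fb_s_pos Hsol); lra).
  destruct (strip_neighbourhood T s tau a (1-a) Ht ltac:(lra) ltac:(lra) ltac:(lra)
              (fb_s_cont Hsol) Hst) as [rho [Hrho Hbox]].
  assert (Hs := cont_on_interior T (fun t => 0 <= t <= T) s tau Ht ltac:(intros; lra)
                 (fb_s_cont Hsol)).
  assert (Hds := cont_on_interior T (fun t => 0 < t <= T) ds tau Ht ltac:(intros; lra)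
                  (fb_ds_cont Hsol)).
  assert (Hcurve : forall k f, cont2_on (Qdom s T) f -> k = a \/ k = 1 - a ->
    cont_at (fun t => f (k * s t) t) tau).
  { intros k f Hf Hk.
    apply (cont2_on_interior_curve (Qdom s T) f (fun t => k * s t) tau rho); auto;
      [|apply cont_at_scal, Hs].
    intros y u Hy Hu. apply Rabs_def2 in Hy.
    apply Hbox; [destruct Hk; subst k; split; nra | apply Rlt_le; auto]. }
  assert (HU : cont2_on (Qdom s T) U).
  { apply (cont2_on_subset _ (Qbar s T)); [|apply (fb_U_cont Hsol)].
    intros x t [[? ?] [? ?]]. split; lra. }
  assert (HUx : cont2_on (Qdom s T) Ux).
  { apply (cont2_on_subset _ (Qbar' s T)); [|apply (fb_Ux_cont Hsol)].
    intros x t [[? ?] [? ?]]. split; [split|]; lra. }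
  unfold strip_mass_rate.
  apply cont_at_minus;
    [apply cont_at_plus; [apply cont_at_minus|apply cont_at_mult]|apply cont_at_mult].
  all: try (apply Hcurve; auto; fail).
  all: apply cont_at_scal, Hds.
Qed.

Lemma U_region_bounded c d : 0 <= c <= d -> d <= T ->
  exists B, 0 <= B /\ forall x t, c <= t <= d -> 0 <= x <= s t -> Rabs (U x t) <= B.
Proof.
  intros Hc Hd. apply (region_bounded T c d s (Qbar s T)); auto.
  - apply (fb_s_cont Hsol).
  - apply s_nonneg.
  - intros x t Ht Hx. split; lra.
  - apply (fb_U_cont Hsol).
Qed.

Lemma strip_width_small t1 t2 : 0 <= t1 <= t2 -> t2 <= T ->
  forall del, 0 < del -> exists a0, 0 < a0 <= 1/4 /\
    forall a t, 0 < a <= a0 -> t1 <= t <= t2 -> 0 <= a * s t < del.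
Proof.
  intros Ht1 Ht2 del Hdel.
  destruct (boundary_bounded T s t1 t2 ltac:(lra) ltac:(lra) (fb_s_cont Hsol)) as [M [HM0 HM]].
  exists (Rmin (1/4) (del / (M + 1))).
  pose proof (Rmin_l (1/4) (del / (M + 1))) as Ha1.
  pose proof (Rmin_r (1/4) (del / (M + 1))) as Ha2.
  split; [split; [apply Rmin_pos; [|apply Rdiv_lt_0_compat]; lra| lra]|].
  intros a t Ha Ht. pose proof (s_nonneg t ltac:(lra)).
  assert (s t <= M) by (pose proof (HM t Ht); pose proof (Rle_abs (s t)); lra).
  split; [nra|].
  apply Rle_lt_trans with (del / (M + 1) * M); [apply Rmult_le_compat; lra|].
  apply (Rmult_lt_reg_r (M + 1)); [lra|]. field_simplify; nra.
Qed.

Lemma strip_flux_near_boundary t1 t2 : 0 < t1 <= t2 -> t2 <= T ->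
  forall eps, 0 < eps -> exists a0, 0 < a0 <= 1/4 /\
    forall a t, 0 < a <= a0 -> t1 <= t <= t2 ->
      Rabs (Ux ((1 - a) * s t) t - Ux (s t) t) < eps /\ Rabs (Ux (a * s t) t - Ux 0 t) < eps.
Proof.
  intros Ht1 Ht2 eps Heps.
  destruct (region_unif T t1 t2 s (Qbar' s T) Ux ltac:(lra) (fb_s_cont Hsol) s_nonneg
              ltac:(intros x t Ht Hx; split; [split|]; lra) (fb_Ux_cont Hsol) eps Heps)
    as [e [He HUx]].
  destruct (strip_width_small t1 t2 ltac:(lra) Ht2 e He) as [a0 [Ha0 Hw]].
  exists a0. split; auto. intros a t Ha Ht. pose proof (Hw a t Ha Ht).
  pose proof (s_nonneg t ltac:(lra)).
  assert (Z : forall z, Rabs (z - z) = 0) by (intro; rewrite Rminus_diag, Rabs_R0; auto).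
  split; apply HUx; try split; try nra; try (rewrite Z; lra).
  - replace ((1 - a) * s t - s t) with (- (a * s t)) by ring. rewrite Rabs_Ropp, Rabs_right; lra.
  - rewrite Rminus_0_r, Rabs_right; lra.
Qed.

Lemma strip_boundary_terms_small t1 t2 : 0 < t1 <= t2 -> t2 <= T ->
  forall eps, 0 < eps -> exists a0, 0 < a0 <= 1/4 /\
    forall a t, 0 < a <= a0 -> t1 <= t <= t2 ->
      Rabs (U ((1 - a) * s t) t * ((1 - a) * ds t)) <= eps /\
      Rabs (U (a * s t) t * (a * ds t)) <= eps.
Proof.
  intros Ht1 Ht2 eps Heps.
  destruct (cont_within_bounded ds t1 t2) as [D HD]; [lra| |].
  { intros x Hx. apply (cont_within_subset _ (fun t => 0 < t <= T)); [intros; lra|].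
    apply (fb_ds_cont Hsol); lra. }
  assert (HD0 : 0 <= D) by (pose proof (HD t1 ltac:(lra)); pose proof (Rabs_pos (ds t1)); lra).
  destruct (U_region_bounded t1 t2 ltac:(lra) ltac:(lra)) as [B [HB0 HB]].
  destruct (region_unif T t1 t2 s (Qbar s T) U ltac:(lra) (fb_s_cont Hsol) s_nonneg
              ltac:(intros x t Ht Hx; split; lra) (fb_U_cont Hsol) (eps / (D + 1))
              ltac:(apply Rdiv_lt_0_compat; lra)) as [e [He HU]].
  destruct (strip_width_small t1 t2 ltac:(lra) Ht2 e He) as [a1 [Ha1 Hw]].
  set (a0 := Rmin a1 (eps / ((B + 1) * (D + 1)))).
  assert (Ha0 : 0 < a0 <= a1 /\ a0 * ((B + 1) * (D + 1)) <= eps).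
  { unfold a0. split; [split; [apply Rmin_pos; [|apply Rdiv_lt_0_compat]; nra| apply Rmin_l]|].
    apply Rle_trans with (eps / ((B + 1) * (D + 1)) * ((B + 1) * (D + 1))).
    - apply Rmult_le_compat_r; [nra| apply Rmin_r].
    - right. field. lra. }
  exists a0. split; [lra|]. intros a t Ha Ht. pose proof (Hw a t ltac:(lra) Ht).
  pose proof (s_nonneg t ltac:(lra)). pose proof (HD t Ht). pose proof (Rabs_pos (ds t)).
  rewrite !Rabs_mult, (Rabs_right (1 - a)), (Rabs_right a) by lra. split.
  - assert (HUs : Rabs (U ((1 - a) * s t) t) < eps / (D + 1)).
    { replace (U ((1 - a) * s t) t) with (U ((1 - a) * s t) t - U (s t) t)
        by (rewrite (fb_U_right Hsol) by lra; ring).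
      apply HU; try split; try nra; [|rewrite Rminus_diag, Rabs_R0; lra].
      replace ((1 - a) * s t - s t) with (- (a * s t)) by ring.
      rewrite Rabs_Ropp, Rabs_right; lra. }
    pose proof (Rabs_pos (U ((1 - a) * s t) t)).
    apply Rle_trans with (eps / (D + 1) * D).
    + apply Rmult_le_compat; nra.
    + apply (Rmult_le_reg_r (D + 1)); [lra|]. field_simplify; nra.
  - assert (Rabs (U (a * s t) t) <= B) by (apply HB; [lra| split; nra]).
    pose proof (Rabs_pos (U (a * s t) t)).
    apply Rle_trans with (a * (B * D)); [rewrite <- Rmult_assoc, (Rmult_comm _ a), Rmult_assoc;
                                         apply Rmult_le_compat; nra|].
    assert (a * (B * D) <= a * ((B + 1) * (D + 1))) by (apply Rmult_le_compat_l; nra).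
    assert (a * ((B + 1) * (D + 1)) <= a0 * ((B + 1) * (D + 1))) by (apply Rmult_le_compat_r; nra).
    lra.
Qed.

Lemma strip_mass_rate_approx t1 t2 : 0 < t1 <= t2 -> t2 < T ->
  forall eps, 0 < eps -> exists a0, 0 < a0 < 1/2 /\
    forall a t, 0 < a <= a0 -> t1 <= t <= t2 ->
      Rabs (strip_mass_rate a t - flux_gap t) <= eps.
Proof.
  intros Ht1 Ht2 eps Heps.
  destruct (strip_flux_near_boundary t1 t2 Ht1 ltac:(lra) (eps/4) ltac:(lra)) as [a1 [Ha1 H1]].
  destruct (strip_boundary_terms_small t1 t2 Ht1 ltac:(lra) (eps/4) ltac:(lra)) as [a2 [Ha2 H2]].
  exists (Rmin a1 a2). pose proof (Rmin_l a1 a2). pose proof (Rmin_r a1 a2).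
  split; [split; [apply Rmin_pos|]; lra|]. intros a t Ha Ht.
  destruct (H1 a t ltac:(lra) Ht) as [A1 A2]. destruct (H2 a t ltac:(lra) Ht) as [A3 A4].
  unfold strip_mass_rate, flux_gap.
  assert (Htri : forall p q r w, Rabs (p - q + r - w) <= Rabs p + Rabs q + Rabs r + Rabs w)
    by (intros; unfold Rabs; repeat destruct Rcase_abs; lra).
  replace (Ux ((1 - a) * s t) t - Ux (a * s t) t + U ((1 - a) * s t) t * ((1 - a) * ds t)
           - U (a * s t) t * (a * ds t) - (Ux (s t) t - Ux 0 t))
    with ((Ux ((1 - a) * s t) t - Ux (s t) t) - (Ux (a * s t) t - Ux 0 t)
          + U ((1 - a) * s t) t * ((1 - a) * ds t) - U (a * s t) t * (a * ds t)) by ring.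
  eapply Rle_trans; [apply Htri|]. lra.
Qed.

Lemma ex_RInt_U_slice t p q : 0 <= t <= T -> 0 <= p <= q -> q <= s t ->
  ex_RInt (fun x => U x t) p q.
Proof.
  intros Ht Hp Hq. apply ex_RInt_cont_within; [lra|].
  apply (cont2_on_slice (Qbar s T)); [apply (fb_U_cont Hsol)|]. intros y Hy. split; lra.
Qed.

Lemma strip_mass_approx t1 t2 : 0 <= t1 <= t2 -> t2 <= T ->
  forall eps, 0 < eps -> exists a0, 0 < a0 < 1/2 /\
    forall a t, 0 < a <= a0 -> t1 <= t <= t2 -> Rabs (mass t - strip_mass a t) <= eps.
Proof.
  intros Ht1 Ht2 eps Heps.
  destruct (U_region_bounded t1 t2 ltac:(lra) ltac:(lra)) as [B [HB0 HB]].
  destruct (strip_width_small t1 t2 Ht1 Ht2 (eps / (2 * (B + 1)))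
              ltac:(apply Rdiv_lt_0_compat; lra))
    as [a0 [Ha0 Hw]].
  exists a0. split; [lra|]. intros a t Ha Ht.
  pose proof (s_nonneg t ltac:(lra)). pose proof (Hw a t Ha Ht) as Has.
  assert (HasB : a * s t * B <= eps / 2).
  { apply Rle_trans with (eps / (2 * (B + 1)) * B); [apply Rmult_le_compat_r; lra|].
    apply (Rmult_le_reg_r (2 * (B + 1))); [lra|]. field_simplify; nra. }
  assert (Hex : forall p q, 0 <= p <= q -> q <= s t -> ex_RInt (fun x => U x t) p q)
    by (intros; apply ex_RInt_U_slice; lra).
  assert (B1 : Rabs (RInt (fun x => U x t) 0 (a * s t)) <= (a * s t - 0) * B).
  { apply abs_RInt_le_const; [nra| apply Hex; nra|]. intros x Hx. apply HB; [lra| split; nra]. }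
  assert (B2 : Rabs (RInt (fun x => U x t) ((1 - a) * s t) (s t)) <= (s t - (1 - a) * s t) * B).
  { apply abs_RInt_le_const; [nra| apply Hex; nra|]. intros x Hx. apply HB; [lra| split; nra]. }
  replace (s t - (1 - a) * s t) with (a * s t) in B2 by ring.
  unfold mass, strip_mass.
  rewrite <- (RInt_Chasles _ 0 (a * s t) (s t)), <- (RInt_Chasles _ (a * s t) ((1 - a) * s t) (s t))
    by (apply Hex; nra).
  unfold plus; simpl.
  replace (RInt (fun x => U x t) 0 (a * s t) + (RInt (fun x => U x t) (a * s t) ((1 - a) * s t)
           + RInt (fun x => U x t) ((1 - a) * s t) (s t))
           - RInt (fun x => U x t) (a * s t) ((1 - a) * s t))
    with (RInt (fun x => U x t) 0 (a * s t) + RInt (fun x => U x t) ((1 - a) * s t) (s t))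
    by ring.
  eapply Rle_trans; [apply Rabs_triang|]. lra.
Qed.

Lemma flux_gap_cont_within e t : 0 < e <= t -> t <= T ->
  forall x, e <= x <= t -> cont_within (fun y => e <= y <= t) flux_gap x.
Proof.
  intros He Ht x Hx. unfold flux_gap. apply cont_within_minus.
  - apply (cont2_on_curve (Qbar' s T) Ux s e t (fb_Ux_cont Hsol)); auto.
    + intros z Hz. apply (cont_within_subset _ (fun t => 0 <= t <= T)); [intros; lra|].
      apply (fb_s_cont Hsol); lra.
    + intros z Hz. pose proof (fb_s_pos Hsol z ltac:(lra)). split; [split|]; lra.
  - apply (cont2_on_curve (Qbar' s T) Ux (fun _ => 0) e t (fb_Ux_cont Hsol)); auto.
    + intros z Hz eps Heps. exists 1; split; [lra|]. intros. rewrite Rminus_diag, Rabs_R0; auto.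
    + intros z Hz. pose proof (fb_s_pos Hsol z ltac:(lra)). split; [split|]; lra.
Qed.

Lemma ex_RInt_flux_gap e t : 0 < e <= t -> t <= T -> ex_RInt flux_gap e t.
Proof. intros He Ht. apply ex_RInt_cont_within; [lra|]. apply flux_gap_cont_within; lra. Qed.

Lemma strip_mass_FTC a t1 t2 : 0 < a < 1/2 -> 0 < t1 <= t2 -> t2 < T ->
  RInt (strip_mass_rate a) t1 t2 = strip_mass a t2 - strip_mass a t1.
Proof.
  intros Ha Ht1 Ht2. apply is_RInt_unique.
  apply (@is_RInt_derive R_CompleteNormedModule (strip_mass a) (strip_mass_rate a));
    intros x Hx; rewrite Rmin_left, Rmax_right in Hx by lra.
  - apply strip_mass_is_derive; lra.
  - apply cont_at_continuous, strip_mass_rate_cont; lra.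
Qed.

Lemma mass_increment_before_T t1 t2 : 0 < t1 <= t2 -> t2 < T ->
  mass t2 - mass t1 = RInt flux_gap t1 t2.
Proof.
  intros Ht1 Ht2.
  apply Rminus_diag_uniq, (eq0_of_Rabs_le_eps _ (t2 - t1 + 2)); [lra|]. intros eps Heps.
  destruct (strip_mass_rate_approx t1 t2 Ht1 Ht2 eps Heps) as [a1 [Ha1 Hrate]].
  destruct (strip_mass_approx t1 t2 ltac:(lra) ltac:(lra) eps Heps) as [a2 [Ha2 Hmass]].
  set (a := Rmin a1 a2).
  assert (Ha : 0 < a <= a1 /\ a <= a2)
    by (unfold a; split; [split; [apply Rmin_pos; lra| apply Rmin_l]| apply Rmin_r]).
  assert (HR : Rabs (RInt (strip_mass_rate a) t1 t2 - RInt flux_gap t1 t2) <= (t2 - t1) * eps).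
  { apply abs_RInt_minus_le; [lra| |apply ex_RInt_flux_gap; lra|].
    - apply (@ex_RInt_continuous R_CompleteNormedModule). intros z Hz.
      rewrite Rmin_left, Rmax_right in Hz by lra.
      apply cont_at_continuous, strip_mass_rate_cont; lra.
    - intros t Ht. apply Hrate; lra. }
  rewrite strip_mass_FTC in HR by lra.
  pose proof (Hmass a t1 ltac:(lra) ltac:(lra)). pose proof (Hmass a t2 ltac:(lra) ltac:(lra)).
  replace (mass t2 - mass t1 - RInt flux_gap t1 t2) with
    ((mass t2 - strip_mass a t2) - (mass t1 - strip_mass a t1)
     + (strip_mass a t2 - strip_mass a t1 - RInt flux_gap t1 t2)) by ring.
  eapply Rle_trans; [apply Rabs_triang|].
  eapply Rle_trans; [apply Rplus_le_compat_r, Rabs_triang|]. rewrite Rabs_Ropp. lra.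
Qed.

Lemma mass_clamp_ext c t : 0 <= c <= t -> t <= T ->
  mass t = RInt (fun x => clamp_ext U s c T x t) 0 (s t).
Proof.
  intros Hc Ht. pose proof (s_nonneg t ltac:(lra)). unfold mass. apply RInt_ext.
  intros x Hx. rewrite Rmin_left, Rmax_right in Hx by lra. rewrite clamp_ext_eq; auto; lra.
Qed.

(* Near t = T the integrand is handled through a bounded, jointly continuous
   extension of U, since s(t) may exceed s(T). *)
Lemma mass_left_cont_T eps : 0 < eps -> exists m, 0 < m /\
  forall t, T - m < t <= T -> Rabs (mass T - mass t) <= eps.
Proof.
  intros Heps. pose proof (fb_T_pos Hsol) as HT.
  set (c := T / 2). assert (Hc : 0 < c < T) by (unfold c; lra).
  assert (Hreg : forall x t, c <= t <= T -> 0 <= x <= s t -> Qbar s T x t)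
    by (intros x t Ht Hx; split; lra).
  pose proof (region_ext_continuous T c T s (Qbar s T) U ltac:(lra) (fb_s_cont Hsol) s_nonneg
                Hreg (fb_U_cont Hsol)) as HUe.
  destruct (region_ext_bounded T c T s (Qbar s T) U ltac:(lra) (fb_s_cont Hsol) s_nonneg
              Hreg (fb_U_cont Hsol)) as [B [HB0 HB]].
  set (Ue := clamp_ext U s c T) in *.
  assert (HexU : forall t p q, ex_RInt (fun x => Ue x t) p q).
  { intros t p q. apply (@ex_RInt_continuous R_CompleteNormedModule).
    intros z _. apply cont_at_continuous, jointly_continuous_slice, HUe. }
  destruct (boundary_bounded T s c T ltac:(lra) ltac:(lra) (fb_s_cont Hsol)) as [M [HM0 HM]].
  destruct (jointly_continuous_unif Ue 0 M c T HUe (eps / (2 * (M + 1)))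
              ltac:(apply Rdiv_lt_0_compat; lra)) as [eta [Heta HU1]].
  destruct (fb_s_cont Hsol T ltac:(lra) (eps / (2 * (B + 1))) ltac:(apply Rdiv_lt_0_compat; lra))
    as [d [Hd Hs]].
  exists (Rmin (Rmin eta d) (T - c)). split; [repeat apply Rmin_pos; lra|].
  intros t Ht. pose proof (Rmin_l (Rmin eta d) (T - c)). pose proof (Rmin_r (Rmin eta d) (T - c)).
  pose proof (Rmin_l eta d). pose proof (Rmin_r eta d).
  assert (HsT : 0 <= s T <= M)
    by (split; [apply s_nonneg; lra|];
        pose proof (HM T ltac:(lra)); pose proof (Rle_abs (s T)); lra).
  rewrite (mass_clamp_ext c T), (mass_clamp_ext c t) by lra. fold Ue.
  rewrite <- (RInt_Chasles (fun x => Ue x t) 0 (s T) (s t)) by apply HexU. unfold plus; simpl.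
  assert (B1 : Rabs (RInt (fun x => Ue x T) 0 (s T) - RInt (fun x => Ue x t) 0 (s T))
               <= (s T - 0) * (eps / (2 * (M + 1)))).
  { apply abs_RInt_minus_le; auto; [lra|]. intros x Hx.
    apply Rlt_le, HU1; try lra; [rewrite Rminus_diag, Rabs_R0| rewrite Rabs_right]; lra. }
  assert (B2 : Rabs (RInt (fun x => Ue x t) (s T) (s t)) <= Rabs (s t - s T) * B)
    by (apply abs_RInt_le_const_any; auto; intros; apply HB; lra).
  assert (Hst : Rabs (s t - s T) < eps / (2 * (B + 1)))
    by (apply Hs; [lra| rewrite Rabs_left1; lra]).
  assert (E1 : (s T - 0) * (eps / (2 * (M + 1))) <= eps / 2).
  { apply (Rmult_le_reg_r (2 * (M + 1))); [lra|]. field_simplify; nra. }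
  assert (E2 : Rabs (s t - s T) * B <= eps / 2).
  { apply Rle_trans with (eps / (2 * (B + 1)) * B); [apply Rmult_le_compat_r; lra|].
    apply (Rmult_le_reg_r (2 * (B + 1))); [lra|]. field_simplify; nra. }
  replace (RInt (fun x => Ue x T) 0 (s T) -
           (RInt (fun x => Ue x t) 0 (s T) + RInt (fun x => Ue x t) (s T) (s t)))
    with ((RInt (fun x => Ue x T) 0 (s T) - RInt (fun x => Ue x t) 0 (s T))
          - RInt (fun x => Ue x t) (s T) (s t)) by ring.
  eapply Rle_trans; [apply Rabs_triang|]. rewrite Rabs_Ropp. lra.
Qed.

Lemma mass_increment e t : 0 < e <= t -> t <= T -> mass t - mass e = RInt flux_gap e t.
Proof.
  intros He Ht.
  destruct (Rlt_le_dec t T) as [HtT|HtT]; [apply mass_increment_before_T; lra|].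
  assert (t = T) by lra. subst t. clear HtT.
  destruct (Req_dec e T) as [->|HeT]; [rewrite RInt_point; unfold zero; simpl; ring|].
  destruct (cont_within_bounded flux_gap e T) as [BD HBD]; [lra| apply flux_gap_cont_within; lra|].
  assert (HBD0 : 0 <= BD)
    by (pose proof (HBD e ltac:(lra)); pose proof (Rabs_pos (flux_gap e)); lra).
  apply Rminus_diag_uniq, (eq0_of_Rabs_le_eps _ (1 + BD)); [lra|]. intros eps Heps.
  destruct (mass_left_cont_T eps Heps) as [m [Hm Hmass]].
  set (t := Rmax e (T - Rmin m eps / 2)).
  pose proof (Rmin_l m eps). pose proof (Rmin_r m eps). pose proof (Rmin_pos m eps Hm Heps).
  assert (Hpos : e <= t < T /\ T - t <= eps /\ T - m < t).
  { unfold t, Rmax. destruct Rle_dec; split_lra. }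
  assert (Hsplit := RInt_Chasles flux_gap e t T
                      (ex_RInt_flux_gap e t ltac:(lra) ltac:(lra))
                      (ex_RInt_flux_gap t T ltac:(lra) ltac:(lra))).
  unfold plus in Hsplit; simpl in Hsplit. rewrite <- Hsplit.
  rewrite <- (mass_increment_before_T e t) by lra.
  assert (Htail : Rabs (RInt flux_gap t T) <= (T - t) * BD).
  { apply abs_RInt_le_const; [lra| apply ex_RInt_flux_gap; lra|].
    intros x Hx. apply HBD; lra. }
  pose proof (Hmass t ltac:(lra)).
  replace (mass T - mass e - (mass t - mass e + RInt flux_gap t T))
    with ((mass T - mass t) - RInt flux_gap t T) by ring.
  eapply Rle_trans; [apply Rabs_triang|]. rewrite Rabs_Ropp.
  assert ((T - t) * BD <= eps * BD) by (apply Rmult_le_compat_r; lra). lra.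
Qed.

Lemma U_nonneg : (forall t, 0 <= t <= T -> 0 <= U 0 t) ->
  forall x t, Qbar s T x t -> 0 <= U x t.
Proof.
  intros H0. apply (heat_min_principle T s U Ux Uxx Ut (fb_T_pos Hsol) (fb_s_cont Hsol)
                      (fb_s_zero Hsol) (fb_s_pos Hsol) (fb_U_cont Hsol) (fb_heat Hsol) H0).
  intros t Ht. rewrite (fb_U_right Hsol) by auto. lra.
Qed.

Lemma U_slice_cont_within t : 0 <= t <= T ->
  forall x, 0 <= x <= s t -> cont_within (fun y => 0 <= y <= s t) (fun y => U y t) x.
Proof.
  intros Ht. apply (cont2_on_slice (Qbar s T)); [apply (fb_U_cont Hsol)|].
  intros y Hy. split; lra.
Qed.

Lemma Ux_slice_cont_within t : 0 < t <= T ->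
  forall x, 0 <= x <= s t -> cont_within (fun y => 0 <= y <= s t) (fun y => Ux y t) x.
Proof.
  intros Ht. apply (cont2_on_slice (Qbar' s T)); [apply (fb_Ux_cont Hsol)|].
  intros y Hy. split; [split|]; lra.
Qed.

Lemma flux_right_nonpos t : 0 < t < T ->
  (forall x, 0 <= x <= s t -> 0 <= U x t) -> Ux (s t) t <= 0.
Proof.
  intros Ht Hpos.
  assert (Hst : 0 < s t) by (apply (fb_s_pos Hsol); lra).
  apply (nonneg_zero_right_deriv_nonpos (fun y => U y t) (fun y => Ux y t) 0 (s t)); auto.
  - apply U_slice_cont_within; lra.
  - intros x Hx. apply U_derive_x. split; lra.
  - apply Ux_slice_cont_within; lra.
  - apply (fb_U_right Hsol). lra.
Qed.

Lemma ex_RInt_right_flux e t : 0 < e <= t -> t <= T -> ex_RInt (fun z => Ux (s z) z) e t.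
Proof.
  intros He Ht. apply ex_RInt_cont_within; [lra|].
  apply (cont2_on_curve (Qbar' s T) Ux s e t (fb_Ux_cont Hsol)).
  - intros z Hz. apply (cont_within_subset _ (fun t => 0 <= t <= T)); [intros; lra|].
    apply (fb_s_cont Hsol); lra.
  - intros z Hz. pose proof (fb_s_pos Hsol z ltac:(lra)). split; [split|]; lra.
Qed.

Lemma ex_RInt_left_flux e t : 0 < e <= t -> t <= T -> ex_RInt (fun z => Ux 0 z) e t.
Proof.
  intros He Ht. apply ex_RInt_cont_within; [lra|].
  apply (cont2_on_curve (Qbar' s T) Ux (fun _ => 0) e t (fb_Ux_cont Hsol)).
  - intros z Hz. apply cont_within_subset with (B := fun _ => True); [auto|].
    intros eps Heps. exists 1; split; [lra|]. intros. rewrite Rminus_diag, Rabs_R0; auto.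
  - intros z Hz. pose proof (fb_s_pos Hsol z ltac:(lra)). split; [split|]; lra.
Qed.

(* U_x(s(z), z) <= 0 because U >= 0 vanishes at x = s(z). *)
Lemma outflow_nonincreasing t : (forall x t, Qbar s T x t -> 0 <= U x t) -> t <= T ->
  forall e1 e2, 0 < e1 <= e2 -> e2 < t ->
    - RInt (fun z => Ux (s z) z) e2 t <= - RInt (fun z => Ux (s z) z) e1 t.
Proof.
  intros Hpos Ht e1 e2 He He2.
  rewrite <- (RInt_Chasles _ e1 e2 t) by (apply ex_RInt_right_flux; lra).
  unfold plus; simpl.
  assert (0 <= RInt (fun z => - Ux (s z) z) e1 e2).
  { apply RInt_ge_0; [lra| |].
    - apply (@ex_RInt_opp R_NormedModule (fun z => Ux (s z) z)), ex_RInt_right_flux; lra.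
    - intros z Hz. enough (Ux (s z) z <= 0) by lra.
      apply flux_right_nonpos; [lra|]. intros x Hx. apply Hpos. split; lra. }
  rewrite (RInt_opp (fun z => Ux (s z) z)) in H by (apply ex_RInt_right_flux; lra).
  unfold opp in H; simpl in H. lra.
Qed.

Lemma outflow_balance e t : 0 < e <= t -> t <= T ->
  - RInt (fun z => Ux (s z) z) e t = - RInt (fun z => Ux 0 z) e t - mass t + mass e.
Proof.
  intros He Ht. pose proof (mass_increment e t He Ht) as Hinc. unfold flux_gap in Hinc.
  rewrite (RInt_minus (fun z => Ux (s z) z) (fun z => Ux 0 z)) in Hinc
    by (try apply ex_RInt_right_flux; try apply ex_RInt_left_flux; lra).
  unfold minus, plus, opp in Hinc; simpl in Hinc. lra.
Qed.

Lemma mass_nonneg t : (forall x t, Qbar s T x t -> 0 <= U x t) -> 0 <= t <= T -> 0 <= mass t.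
Proof.
  intros Hpos Ht. pose proof (s_nonneg t Ht).
  apply RInt_ge_0; [lra| apply ex_RInt_U_slice; lra|].
  intros x Hx. apply Hpos. split; lra.
Qed.

Lemma mass_small_near_0 e d : U 0 0 = 0 -> 0 < e <= T -> 0 < d ->
  exists e', 0 < e' < e /\ mass e' < d.
Proof.
  intros HU00 He Hd.
  assert (H00 : Qbar s T 0 0) by (split; [| rewrite (fb_s_zero Hsol)]; lra).
  destruct (fb_U_cont Hsol 0 0 H00 (d/2) ltac:(lra)) as [d1 [Hd1 HU]].
  destruct (fb_s_cont Hsol 0 ltac:(lra) (Rmin d1 1) ltac:(apply Rmin_pos; lra)) as [d2 [Hd2 Hs]].
  pose proof (Rmin_l d1 1). pose proof (Rmin_r d1 1).
  set (e' := Rmin (Rmin e d1) d2 / 2).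
  pose proof (Rmin_l (Rmin e d1) d2). pose proof (Rmin_r (Rmin e d1) d2).
  pose proof (Rmin_l e d1). pose proof (Rmin_r e d1).
  assert (He' : 0 < e' /\ e' < e /\ e' < d1 /\ e' < d2)
    by (unfold e'; pose proof (Rmin_pos _ _ (Rmin_pos _ _ (proj1 He) Hd1) Hd2); split_lra).
  clearbody e'. exists e'. split; [lra|].
  assert (Hse : s e' < Rmin d1 1).
  { pose proof (Hs e' ltac:(lra) ltac:(rewrite Rminus_0_r, Rabs_right; lra)) as H'.
    rewrite (fb_s_zero Hsol), Rminus_0_r in H'. pose proof (Rle_abs (s e')). lra. }
  pose proof (s_nonneg e' ltac:(lra)).
  assert (HB : Rabs (mass e') <= (s e' - 0) * (d / 2)).
  { apply abs_RInt_le_const; [lra| apply ex_RInt_U_slice; lra|]. intros x Hx.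
    pose proof (HU x e' ltac:(split; lra) ltac:(rewrite Rminus_0_r, Rabs_right; lra)
                  ltac:(rewrite Rminus_0_r, Rabs_right; lra)) as H'.
    rewrite HU00, Rminus_0_r in H'. lra. }
  pose proof (Rle_abs (mass e')).
  assert ((s e' - 0) * (d / 2) <= 1 * (d / 2)) by (apply Rmult_le_compat_r; lra). lra.
Qed.

End Mass.

(** * Comparison *)

Definition sup_near_0 (f : R -> R) (t : R) : Rbar :=
  Lub_Rbar (fun y => exists e, 0 < e < t /\ y = f e).

Lemma sup_near_0_ub (f : R -> R) (t e : R) : 0 < e < t -> Rbar_le (f e) (sup_near_0 f t).
Proof.
  intros He. destruct (Lub_Rbar_correct (fun y => exists e, 0 < e < t /\ y = f e)) as [Hub _].
  apply Hub. exists e; auto.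
Qed.

Lemma sup_near_0_not_m_infty (f : R -> R) (t : R) : 0 < t -> sup_near_0 f t <> m_infty.
Proof.
  intros Ht Heq. pose proof (sup_near_0_ub f t (t/2) ltac:(lra)) as H.
  rewrite Heq in H. exact H.
Qed.

Lemma sup_near_0_approx (f : R -> R) (t M : R) : Rbar_lt M (sup_near_0 f t) ->
  exists e, 0 < e < t /\ M < f e.
Proof.
  intros HM. apply NNPP. intro Hn.
  destruct (Lub_Rbar_correct (fun y => exists e, 0 < e < t /\ y = f e)) as [_ Hlub].
  assert (Hb : is_ub_Rbar (fun y => exists e, 0 < e < t /\ y = f e) M).
  { intros y [e [He ->]]. simpl. apply Rnot_lt_le. intro Hlt. apply Hn. exists e; auto. }
  specialize (Hlub M Hb). apply (Rbar_lt_not_le _ _ HM Hlub).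
Qed.

Lemma nonincreasing_lim_at_right (f : R -> R) t : 0 < t ->
  (forall e1 e2, 0 < e1 <= e2 -> e2 < t -> f e2 <= f e1) ->
  filterlim f (at_right 0) (Rbar_locally (sup_near_0 f t)).
Proof.
  intros Ht Hmono P HP.
  pose proof (sup_near_0_ub f t) as Hub. pose proof (sup_near_0_approx f t) as Happrox.
  destruct (sup_near_0 f t) as [l| |] eqn:HL.
  - destruct HP as [eps Heps]. pose proof (cond_pos eps).
    destruct (Happrox (l - eps)) as [e0 [He0 Hf0]]; [simpl; lra|].
    apply locally_Rabs with (d := e0); [lra|].
    intros y Hy Hy0. apply Rabs_def2 in Hy. rewrite Rminus_0_r in Hy.
    apply Heps. pose proof (Hub y ltac:(lra)). simpl in H0.
    pose proof (Hmono y e0 ltac:(lra) ltac:(lra)).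
    change (Rabs (f y - l) < eps). apply Rabs_def1; lra.
  - destruct HP as [M HM].
    destruct (Happrox M) as [e0 [He0 Hf0]]; [simpl; auto|].
    apply locally_Rabs with (d := e0); [lra|].
    intros y Hy Hy0. apply Rabs_def2 in Hy. rewrite Rminus_0_r in Hy.
    apply HM. pose proof (Hmono y e0 ltac:(lra) ltac:(lra)). lra.
  - exfalso. exact (sup_near_0_not_m_infty f t Ht HL).
Qed.

(* Every value of f2 is approached by values of f1 closer to 0. *)
Lemma sup_near_0_le (f1 f2 G : R -> R) t : 0 < t ->
  (forall e1 e2, 0 < e1 <= e2 -> e2 < t -> f2 e2 <= f2 e1) ->
  (forall e, 0 < e < t -> f2 e <= f1 e + G e) ->
  (forall e d, 0 < e < t -> 0 < d -> exists e', 0 < e' < e /\ G e' < d) ->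
  Rbar_le (sup_near_0 f2 t) (sup_near_0 f1 t).
Proof.
  intros Ht Hmono Hle HG.
  destruct (Lub_Rbar_correct (fun y => exists e, 0 < e < t /\ y = f2 e)) as [_ Hlub].
  apply Hlub. intros y [e [He ->]].
  pose proof (sup_near_0_ub f1 t) as Hub.
  pose proof (sup_near_0_not_m_infty f1 t Ht) as Hnm.
  destruct (sup_near_0 f1 t) as [l| |]; simpl; auto.
  - apply Rnot_lt_le. intro Hlt.
    destruct (HG e (f2 e - l) He ltac:(lra)) as [e' [He' HGe']].
    pose proof (Hub e' ltac:(lra)). simpl in H.
    pose proof (Hmono e' e ltac:(lra) ltac:(lra)).
    pose proof (Hle e' ltac:(lra)). lra.
Qed.

Section Comparison.

Variables (T : R) (g s1 ds1 s2 ds2 : R -> R) (U1 Ux1 Uxx1 Ut1 U2 Ux2 Uxx2 Ut2 : R -> R -> R).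
Hypothesis Hsol1 : fixed_boundary_sol T s1 ds1 U1 Ux1 Uxx1 Ut1.
Hypothesis Hsol2 : fixed_boundary_sol T s2 ds2 U2 Ux2 Uxx2 Ut2.
Hypothesis g_nonneg : forall t, 0 <= t <= T -> 0 <= g t.
Hypothesis U1_left : forall t, 0 <= t <= T -> U1 0 t = g t.
Hypothesis U2_left : forall t, 0 <= t <= T -> U2 0 t = g t.
Hypothesis s1_le_s2 : forall t, 0 <= t <= T -> s1 t <= s2 t.

Lemma U1_nonneg x t : Qbar s1 T x t -> 0 <= U1 x t.
Proof. apply (U_nonneg T s1 ds1 U1 Ux1 Uxx1 Ut1 Hsol1). intros. rewrite U1_left; auto. Qed.

Lemma U2_nonneg x t : Qbar s2 T x t -> 0 <= U2 x t.
Proof. apply (U_nonneg T s2 ds2 U2 Ux2 Uxx2 Ut2 Hsol2). intros. rewrite U2_left; auto. Qed.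

Lemma Qbar_mono x t : Qbar s1 T x t -> Qbar s2 T x t.
Proof. intros [Ht Hx]. split; auto. pose proof (s1_le_s2 t Ht). lra. Qed.

(* U2 - U1 solves the heat equation on Q_{s1,T}, vanishes on x = 0 and equals
   U2 >= 0 on x = s1. *)
Lemma solutions_ordered x t : Qbar s1 T x t -> U1 x t <= U2 x t.
Proof.
  intros Hq. enough (0 <= U2 x t - U1 x t) by lra. revert x t Hq.
  apply (heat_min_principle T s1 _ (fun x t => Ux2 x t - Ux1 x t)
           (fun x t => Uxx2 x t - Uxx1 x t) (fun x t => Ut2 x t - Ut1 x t)
           (fb_T_pos Hsol1) (fb_s_cont Hsol1) (fb_s_zero Hsol1) (fb_s_pos Hsol1)).
  - apply cont2_on_minus; [|apply (fb_U_cont Hsol1)].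
    apply (cont2_on_subset _ (Qbar s2 T)); [apply Qbar_mono| apply (fb_U_cont Hsol2)].
  - apply (heat_sol_on_minus s1 s2); [|apply (fb_heat Hsol1)| apply (fb_heat Hsol2)].
    intros x t [Hx Ht]. split; auto. pose proof (s1_le_s2 t ltac:(lra)). lra.
  - intros t Ht. rewrite U1_left, U2_left by auto. lra.
  - intros t Ht. rewrite (fb_U_right Hsol1) by auto. rewrite Rminus_0_r.
    apply U2_nonneg, Qbar_mono. pose proof (s_nonneg T s1 ds1 U1 Ux1 Uxx1 Ut1 Hsol1 t Ht).
    split; lra.
Qed.

Lemma left_flux_ordered z : 0 < z < T -> Ux1 0 z <= Ux2 0 z.
Proof.
  intros Hz. pose proof (fb_s_pos Hsol1 z ltac:(lra)) as Hs.
  enough (0 <= Ux2 0 z - Ux1 0 z) by lra.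
  apply (nonneg_zero_left_deriv_nonneg (fun x => U2 x z - U1 x z)
           (fun x => Ux2 x z - Ux1 x z) 0 (s1 z)); auto.
  - intros x Hx. apply cont_within_minus.
    + apply (cont2_on_slice (Qbar s2 T)); [apply (fb_U_cont Hsol2)| |auto].
      intros y Hy. apply Qbar_mono. split; lra.
    + apply (U_slice_cont_within T s1 ds1 U1 Ux1 Uxx1 Ut1 Hsol1); auto; lra.
  - intros x Hx. assert (Hq : Qdom s1 T x z) by (split; lra).
    apply (is_derive_minus (fun y => U2 y z) (fun y => U1 y z)).
    + apply (U_derive_x T s2 ds2 U2 Ux2 Uxx2 Ut2 Hsol2).
      pose proof (s1_le_s2 z ltac:(lra)). split; lra.
    + apply (U_derive_x T s1 ds1 U1 Ux1 Uxx1 Ut1 Hsol1 x z Hq).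
  - apply cont_within_minus; [|apply (Ux_slice_cont_within T s1 ds1 U1 Ux1 Uxx1 Ut1 Hsol1); lra].
    apply (cont2_on_slice (Qbar' s2 T)); [apply (fb_Ux_cont Hsol2)| |lra].
    intros y Hy. split; [apply Qbar_mono; split|]; lra.
  - rewrite U1_left, U2_left by lra. ring.
  - intros x Hx. pose proof (solutions_ordered x z ltac:(split; lra)). lra.
Qed.

Lemma mass_ordered t : 0 <= t <= T -> mass s1 U1 t <= mass s2 U2 t.
Proof.
  intros Ht. unfold mass.
  pose proof (s1_le_s2 t Ht). pose proof (s_nonneg T s1 ds1 U1 Ux1 Uxx1 Ut1 Hsol1 t Ht).
  rewrite <- (RInt_Chasles (fun x => U2 x t) 0 (s1 t) (s2 t))
    by (apply (ex_RInt_U_slice T s2 ds2 U2 Ux2 Uxx2 Ut2 Hsol2); lra).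
  unfold plus; simpl.
  assert (RInt (fun x => U1 x t) 0 (s1 t) <= RInt (fun x => U2 x t) 0 (s1 t)).
  { apply RInt_le; [lra| apply (ex_RInt_U_slice T s1 ds1 U1 Ux1 Uxx1 Ut1 Hsol1); lra|
      apply (ex_RInt_U_slice T s2 ds2 U2 Ux2 Uxx2 Ut2 Hsol2); lra|].
    intros x Hx. apply solutions_ordered. split; lra. }
  assert (0 <= RInt (fun x => U2 x t) (s1 t) (s2 t)).
  { apply RInt_ge_0; [lra| apply (ex_RInt_U_slice T s2 ds2 U2 Ux2 Uxx2 Ut2 Hsol2); lra|].
    intros x Hx. apply U2_nonneg. split; lra. }
  lra.
Qed.

(* By the mass balance, the outflow through s2 exceeds that through s1 by at
   most the initial mass of U2. *)
Lemma outflow_compare e t : 0 < e <= t -> t <= T ->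
  - RInt (fun z => Ux2 (s2 z) z) e t
    <= - RInt (fun z => Ux1 (s1 z) z) e t + mass s2 U2 e.
Proof.
  intros He Ht.
  rewrite (outflow_balance T s1 ds1 U1 Ux1 Uxx1 Ut1 Hsol1 e t),
          (outflow_balance T s2 ds2 U2 Ux2 Uxx2 Ut2 Hsol2 e t) by lra.
  assert (RInt (fun z => Ux1 0 z) e t <= RInt (fun z => Ux2 0 z) e t).
  { apply RInt_le; [lra| apply (ex_RInt_left_flux T s1 ds1 U1 Ux1 Uxx1 Ut1 Hsol1); lra|
      apply (ex_RInt_left_flux T s2 ds2 U2 Ux2 Uxx2 Ut2 Hsol2); lra|].
    intros z Hz. apply left_flux_ordered. lra. }
  pose proof (mass_ordered t ltac:(lra)).
  pose proof (mass_nonneg T s1 ds1 U1 Ux1 Uxx1 Ut1 Hsol1 e U1_nonneg ltac:(lra)). lra.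
Qed.

End Comparison.

Theorem mainTheorem6 (T : R) (g : R -> R) :
  0 < T ->
  cont_on (fun t => 0 <= t <= T) g ->
  (forall t, 0 <= t <= T -> 0 <= g t) ->
  g 0 = 0 ->
  (forall s, boundary_fn T s -> exists U Ux, FBDP_sol T s g U Ux) ->
  forall (s1 s2 : R -> R) (U1 Ux1 U2 Ux2 : R -> R -> R),
    boundary_fn T s1 -> boundary_fn T s2 ->
    FBDP_sol T s1 g U1 Ux1 -> FBDP_sol T s2 g U2 Ux2 ->
    (forall t, 0 <= t <= T -> s1 t <= s2 t) ->
    forall t, 0 <= t <= T ->
      exists r1 r2 : Rbar, Rval s1 Ux1 t r1 /\ Rval s2 Ux2 t r2 /\ Rbar_le r2 r1.
Proof.
  intros HT _ Hg _ _ s1 s2 U1 Ux1 U2 Ux2 Hb1 Hb2 Hsol1 Hsol2 Hle t Ht.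
  destruct (Req_dec t 0) as [Ht0|Ht0].
  { exists (Finite 0), (Finite 0). split; [|split]; [left; auto| left; auto| simpl; lra]. }
  destruct (fixed_boundary_sol_of_FBDP T s1 g U1 Ux1 HT Hb1 Hsol1)
    as [ds1 [Uxx1 [Ut1 [H1 [Hleft1 _]]]]].
  destruct (fixed_boundary_sol_of_FBDP T s2 g U2 Ux2 HT Hb2 Hsol2)
    as [ds2 [Uxx2 [Ut2 [H2 [Hleft2 HU200]]]]].
  set (f1 := fun e => - RInt (fun z => Ux1 (s1 z) z) e t).
  set (f2 := fun e => - RInt (fun z => Ux2 (s2 z) z) e t).
  assert (Hmono2 : forall e1 e2, 0 < e1 <= e2 -> e2 < t -> f2 e2 <= f2 e1)
    by (apply (outflow_nonincreasing T s2 ds2 U2 Ux2 Uxx2 Ut2 H2);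
        [exact (U2_nonneg T g s2 ds2 U2 Ux2 Uxx2 Ut2 H2 Hg Hleft2)| lra]).
  exists (sup_near_0 f1 t), (sup_near_0 f2 t). split; [|split].
  - right. split; [lra|]. apply nonincreasing_lim_at_right; [lra|].
    apply (outflow_nonincreasing T s1 ds1 U1 Ux1 Uxx1 Ut1 H1); [|lra].
    exact (U1_nonneg T g s1 ds1 U1 Ux1 Uxx1 Ut1 H1 Hg Hleft1).
  - right. split; [lra|]. apply nonincreasing_lim_at_right; [lra| exact Hmono2].
  - apply (sup_near_0_le f1 f2 (mass s2 U2) t); [lra| exact Hmono2| |].
    + intros e He. apply (outflow_compare T g s1 ds1 s2 ds2 U1 Ux1 Uxx1 Ut1 U2 Ux2 Uxx2 Ut2);
        auto; lra.
    + intros e d He Hd. apply (mass_small_near_0 T s2 ds2 U2 Ux2 Uxx2 Ut2 H2); auto; lra.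
Qed.
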